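(* Let $\omega$ be a Type (c) general obstacle with extreme edges $e_1,e_2,e_3,e_4$ such that no pair of extreme edges of $\omega$ is mutually visible, and for each $i$ let $s_i^\perp$ denote a perpendicular extreme visibility edge for $e_i$. Then $\{s_1^\perp,s_2^\perp,s_3^\perp,s_4^\perp\}$ is a minimum skeleton for $\omega$.
   Context: An obstacle $\omega$ is a simple polygon in $\mathbb{R}^2$ (a closed, bounded polygonal region without holes whose boundary does not intersect itself), assumed in general position (no three of its vertices are collinear); vertices and edges of $\omega$ are those of its boundary. $\omega$ is rectilinear if each edge is horizontal or vertical, and a rectilinear obstacle is rectilinearly-convex if any two points of $\omega$ can be joined by a shortest rectilinear path (made of horizontal and vertical segments, of minimum $\ell_1$ length) contained in $\omega$. A corner point of a rectilinear path is a point where a horizontal and a vertical segment of the path meet. A set $S$ of closed line segments is inside $\omega$ if the union of its elements is contained in $\omega$. Such an $S$ is a skeleton for $\omega$ if for every pair of points $p,q$ not in the interior of $\omega$ such that every shortest rectilinear path between $p$ and $q$ with at most one corner point meets the interior of $\omega$, each such path intersects some element of $S$; a minimum skeleton is one with the fewest segments. $B(\omega)$ is the smallest closed axis-parallel rectangle containing $\omega$; the extreme edges are the edges of $\omega$ lying on the boundary of $B(\omega)$ (exactly four: left, right, bottom, top); an extreme corner is a vertex of $\omega$ that is a common endpoint of two extreme edges. A general obstacle is a rectilinearly-convex obstacle with no extreme corners. Two parallel extreme edges overlap if the orthogonal projection of one onto the line containing the other meets the other; a non-overlapping pair of parallel extreme edges is positively (negatively) sloped if the segment joining their midpoints has positive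 (negative) gradient. A Type (c) general obstacle is a general obstacle in which neither pair of parallel extreme edges overlaps and the two pairs have different slopes. Two segments in $\omega$ are mutually visible if there are points $p_1$ on one and $p_2$ on the other such that the segment $p_1p_2$ is contained in $\omega$. Visibility edges are line segments contained in $\omega$, always taken of maximum length (extended at both ends as far as possible within $\omega$); a perpendicular extreme visibility edge for an extreme edge $e$ is a visibility edge with an endpoint on $e$ that is perpendicular to $e$. *)

From Stdlib Require Import Reals Lra Lia Arith List.
Open Scope R_scope.

Definition pt : Type := (R * R)%type.
Definition px (p : pt) : R := fst p.
Definition py (p : pt) : R := snd p.

Definition seg (a b : pt) (p : pt) : Prop :=
  exists t, 0 <= t <= 1 /\ px p = px a + t * (px b - px a)
                        /\ py p = py a + t * (py b - py a).

Definition subset (A B : pt -> Prop) : Prop := forall p, A p -> B p.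

Definition l1 (a b : pt) : R := Rabs (px b - px a) + Rabs (py b - py a).
Definition dinf (a b : pt) : R := Rmax (Rabs (px b - px a)) (Rabs (py b - py a)).

Definition nv (V : list pt) : nat := length V.
Definition vtx (V : list pt) (i : nat) : pt := nth i V (0, 0).
Definition nxt (V : list pt) (i : nat) : nat := Nat.modulo (S i) (nv V).
Definition edge_pts (V : list pt) (i : nat) : pt -> Prop := seg (vtx V i) (vtx V (nxt V i)).

Definition on_boundary (V : list pt) (p : pt) : Prop :=
  exists i, (i < nv V)%nat /\ edge_pts V i p.

Definition simple_polygon (V : list pt) : Prop :=
  (3 <= nv V)%nat /\ NoDup V /\
  forall i j p, (i < nv V)%nat -> (j < nv V)%nat -> i <> j ->
    edge_pts V i p -> edge_pts V j p ->
    (j = nxt V i /\ p = vtx V j) \/ (i = nxt V j /\ p = vtx V i).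

Definition collinear (a b c : pt) : Prop :=
  (px b - px a) * (py c - py a) - (py b - py a) * (px c - px a) = 0.

Definition general_position (V : list pt) : Prop :=
  forall i j k, (i < nv V)%nat -> (j < nv V)%nat -> (k < nv V)%nat ->
    i <> j -> j <> k -> i <> k -> ~ collinear (vtx V i) (vtx V j) (vtx V k).

Definition cont01 (g : R -> pt) : Prop :=
  forall t, 0 <= t <= 1 -> forall eps, 0 < eps ->
    exists d, 0 < d /\ forall s, 0 <= s <= 1 -> Rabs (s - t) < d ->
      dinf (g s) (g t) < eps.

Definition reach_off (V : list pt) (p q : pt) : Prop :=
  exists g : R -> pt, cont01 g /\ g 0 = p /\ g 1 = q /\
    forall t, 0 <= t <= 1 -> ~ on_boundary V (g t).

(* the closed polygonal region: the boundary curve together with the bounded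
   component(s) of its complement *)
Definition region (V : list pt) (p : pt) : Prop :=
  on_boundary V p \/
  (~ on_boundary V p /\
   exists M, forall q, reach_off V p q -> Rabs (px q) <= M /\ Rabs (py q) <= M).

Definition interior (A : pt -> Prop) (p : pt) : Prop :=
  exists eps, 0 < eps /\ forall q, dinf p q < eps -> A q.

Definition obstacle (V : list pt) : Prop := simple_polygon V /\ general_position V.

Definition rectilinear (V : list pt) : Prop :=
  forall i, (i < nv V)%nat ->
    px (vtx V i) = px (vtx V (nxt V i)) \/ py (vtx V i) = py (vtx V (nxt V i)).

Fixpoint rpath_in (A : pt -> Prop) (a : pt) (l : list pt) : Prop :=
  match l with
  | nil => True
  | b :: l' => (px a = px b \/ py a = py b) /\ subset (seg a b) A /\ rpath_in A b l'
  end.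
Fixpoint rpath_len (a : pt) (l : list pt) : R :=
  match l with
  | nil => 0
  | b :: l' => l1 a b + rpath_len b l'
  end.

Definition rect_convex (V : list pt) : Prop :=
  forall p q, region V p -> region V q ->
    exists l, rpath_in (region V) p l /\ last (p :: l) p = q /\ rpath_len p l = l1 p q.

Definition left_edge (V : list pt) (i : nat) : Prop :=
  (i < nv V)%nat /\ forall k, (k < nv V)%nat ->
    px (vtx V i) <= px (vtx V k) /\ px (vtx V (nxt V i)) <= px (vtx V k).
Definition right_edge (V : list pt) (i : nat) : Prop :=
  (i < nv V)%nat /\ forall k, (k < nv V)%nat ->
    px (vtx V k) <= px (vtx V i) /\ px (vtx V k) <= px (vtx V (nxt V i)).
Definition bottom_edge (V : list pt) (i : nat) : Prop :=
  (i < nv V)%nat /\ forall k, (k < nv V)%nat ->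
    py (vtx V i) <= py (vtx V k) /\ py (vtx V (nxt V i)) <= py (vtx V k).
Definition top_edge (V : list pt) (i : nat) : Prop :=
  (i < nv V)%nat /\ forall k, (k < nv V)%nat ->
    py (vtx V k) <= py (vtx V i) /\ py (vtx V k) <= py (vtx V (nxt V i)).

Definition extreme_edge (V : list pt) (i : nat) : Prop :=
  left_edge V i \/ right_edge V i \/ bottom_edge V i \/ top_edge V i.

Definition share_endpoint (V : list pt) (i j : nat) : Prop :=
  exists v, (v = vtx V i \/ v = vtx V (nxt V i)) /\ (v = vtx V j \/ v = vtx V (nxt V j)).

Definition no_extreme_corner (V : list pt) : Prop :=
  forall i j, extreme_edge V i -> extreme_edge V j -> i <> j -> ~ share_endpoint V i j.

Definition general_obstacle (V : list pt) : Prop :=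
  obstacle V /\ rectilinear V /\ rect_convex V /\ no_extreme_corner V.

Definition intervals_meet (a b c d : R) : Prop :=
  Rmax (Rmin a b) (Rmin c d) <= Rmin (Rmax a b) (Rmax c d).
Definition overlap_vert (V : list pt) (i j : nat) : Prop :=
  intervals_meet (py (vtx V i)) (py (vtx V (nxt V i))) (py (vtx V j)) (py (vtx V (nxt V j))).
Definition overlap_horiz (V : list pt) (i j : nat) : Prop :=
  intervals_meet (px (vtx V i)) (px (vtx V (nxt V i))) (px (vtx V j)) (px (vtx V (nxt V j))).

Definition midpt (a b : pt) : pt := ((px a + px b) / 2, (py a + py b) / 2).
Definition emid (V : list pt) (i : nat) : pt := midpt (vtx V i) (vtx V (nxt V i)).
(* sign of the gradient of the segment joining the midpoints *)
Definition pos_sloped (V : list pt) (i j : nat) : Prop :=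
  (py (emid V j) - py (emid V i)) * (px (emid V j) - px (emid V i)) > 0.
Definition neg_sloped (V : list pt) (i j : nat) : Prop :=
  (py (emid V j) - py (emid V i)) * (px (emid V j) - px (emid V i)) < 0.

Definition typeC (V : list pt) (iL iR iB iT : nat) : Prop :=
  general_obstacle V /\
  left_edge V iL /\ right_edge V iR /\ bottom_edge V iB /\ top_edge V iT /\
  ~ overlap_vert V iL iR /\ ~ overlap_horiz V iB iT /\
  ((pos_sloped V iL iR /\ neg_sloped V iB iT) \/
   (neg_sloped V iL iR /\ pos_sloped V iB iT)).

Definition mutually_visible (A : pt -> Prop) (s t : pt -> Prop) : Prop :=
  exists p1 p2, s p1 /\ t p2 /\ subset (seg p1 p2) A.

Definition visibility_edge (A : pt -> Prop) (a b : pt) : Prop :=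
  a <> b /\ subset (seg a b) A /\
  forall c d, subset (seg a b) (seg c d) -> subset (seg c d) A -> subset (seg c d) (seg a b).

Definition perp_ext_vis_edge (V : list pt) (s : pt * pt) (i : nat) : Prop :=
  let (a, b) := s in
  let u := vtx V i in let v := vtx V (nxt V i) in
  visibility_edge (region V) a b /\
  (seg u v a \/ seg u v b) /\
  (px b - px a) * (px v - px u) + (py b - py a) * (py v - py u) = 0.

Definition seg_of (s : pt * pt) : pt -> Prop := seg (fst s) (snd s).

Definition inside (V : list pt) (S : list (pt * pt)) : Prop :=
  forall s, In s S -> fst s <> snd s /\ subset (seg_of s) (region V).

(* the shortest rectilinear paths between p and q with at most one corner:
   the two L-shaped paths through c = (qx,py) or c = (px,qy) (they coincide
   with the segment pq when p and q are aligned) *)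
Definition Lpath (p q : pt) (k : bool) (x : pt) : Prop :=
  let c := if k then (px q, py p) else (px p, py q) in
  seg p c x \/ seg c q x.

Definition meets (A B : pt -> Prop) : Prop := exists x, A x /\ B x.

Definition skeleton (V : list pt) (S : list (pt * pt)) : Prop :=
  inside V S /\
  forall p q, ~ interior (region V) p -> ~ interior (region V) q ->
    (forall k, meets (Lpath p q k) (interior (region V))) ->
    forall k, exists s, In s S /\ meets (Lpath p q k) (seg_of s).

Definition set_size (S : list (pt * pt)) (n : nat) : Prop :=
  exists l, NoDup l /\ (forall s, In s l <-> In s S) /\ length l = n.

Definition minimum_skeleton (V : list pt) (S : list (pt * pt)) : Prop :=
  skeleton V S /\
  forall S' n n', skeleton V S' -> set_size S n -> set_size S' n' -> (n <= n')%nat.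

(* A perpendicular extreme visibility edge of ω is, by rectilinear convexity, the whole chord
   of ω on its line. In a Type (c) obstacle the four chord lines (vertical through the top and
   bottom edges, horizontal through the left and right edges) are staggered, and from every
   point of ω on the appropriate side of a chord line, the row or column segment to that line
   stays in ω. If p and q are not interior points but both L-paths between them enter the
   interior, following these row and column segments from an interior point of each L-path
   shows that p or q would be interior unless the first L-path meets ω on a chord line, i.e.
   meets a chord; the second L-path is the first one of (q, p).
   Conversely, if no segment of a skeleton ended on an extreme edge e, a segment parallel to e
   just inside ω, with both ends far outside ω, would meet the interior and miss the skeleton;
   as the extreme edges are pairwise invisible, no segment inside ω ends on two of them, so
   every skeleton has at least four segments. *)

From Stdlib Require Import Reals List Lra Lia Classical.
Open Scope R_scope.

Ltac rabs := unfold Rabs in *; repeat destruct Rcase_abs; lra.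

(** * Segments and axis-parallel frames *)

Definition between (a b x : R) : Prop := (a <= x <= b) \/ (b <= x <= a).

Ltac solve_between := unfold between in *;
  repeat match goal with H : _ \/ _ |- _ => destruct H end;
  first [ lra | solve [left; lra] | solve [right; lra] ].

Lemma between_sym a b x : between a b x -> between b a x.
Proof. solve_between. Qed.

Lemma between_right a b : between a b b.
Proof. destruct (Rle_dec a b); [left | right]; lra. Qed.

Lemma between_affine a b t : 0 <= t <= 1 -> between a b (a + t * (b - a)).
Proof. intros Ht. destruct (Rle_dec a b); [left | right]; split; nra. Qed.

Lemma between_affine_inv a b x : between a b x -> exists t, 0 <= t <= 1 /\ x = a + t * (b - a).
Proof.
  intros H. destruct (Req_dec a b) as [E|E].
  - exists 0. split; [lra|]. subst. destruct H; lra.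
  - exists ((x - a) / (b - a)).
    assert (Et : (x - a) / (b - a) * (b - a) = x - a) by (field; lra).
    split; [|lra].
    destruct H; [assert (b - a > 0) | assert (b - a < 0)]; try lra; split; nra.
Qed.

Lemma pt_eta (p : pt) : p = (px p, py p).
Proof. destruct p; reflexivity. Qed.

Lemma seg_start a b : seg a b a.
Proof. exists 0. split; [lra|]. split; ring. Qed.

Lemma seg_end a b : seg a b b.
Proof. exists 1. split; [lra|]. split; ring. Qed.

Lemma seg_horizontal a b p : py a = py b ->
  (seg a b p <-> py p = py a /\ between (px a) (px b) (px p)).
Proof.
  intros E. split.
  - intros [t [Ht [Hx Hy]]]. split; [rewrite Hy, E; ring | rewrite Hx; apply between_affine; auto].
  - intros [Hy Hb]. destruct (between_affine_inv _ _ _ Hb) as [t [Ht Hx]].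
    exists t. split; [exact Ht|]. split; [exact Hx|]. rewrite Hy, E. ring.
Qed.

Lemma seg_vertical a b p : px a = px b ->
  (seg a b p <-> px p = px a /\ between (py a) (py b) (py p)).
Proof.
  intros E. split.
  - intros [t [Ht [Hx Hy]]]. split; [rewrite Hx, E; ring | rewrite Hy; apply between_affine; auto].
  - intros [Hx Hb]. destruct (between_affine_inv _ _ _ Hb) as [t [Ht Hy]].
    exists t. split; [exact Ht|]. split; [|exact Hy]. rewrite Hx, E. ring.
Qed.

Lemma seg_subset a b u v : seg a b u -> seg a b v -> subset (seg u v) (seg a b).
Proof.
  intros [t1 [H1 [X1 Y1]]] [t2 [H2 [X2 Y2]]] w [s [Hs [Xw Yw]]].
  exists (t1 + s * (t2 - t1)). split.
  - split; nra.
  - split; [rewrite Xw, X1, X2 | rewrite Yw, Y1, Y2]; ring.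
Qed.

(* The four outward normals of B(ω); [height] and [offset] are coordinates in the frame
   of a normal, and [point_at] inverts them. *)
Definition height (al be : R) (p : pt) : R := al * px p + be * py p.
Definition offset (al be : R) (p : pt) : R := height (- be) al p.
Definition axis (al be : R) : Prop :=
  (al = 0 /\ (be = 1 \/ be = -1)) \/ (be = 0 /\ (al = 1 \/ al = -1)).
Definition point_at (al be h o : R) : pt := (al * h - be * o, be * h + al * o).

Ltac case_axis Hax := destruct Hax as [[-> [-> | ->]]|[-> [-> | ->]]].

Lemma axis_rot al be : axis al be -> axis (- be) al.
Proof. intros Hax. case_axis Hax; [right|right|left|left]; split; (lra || (left; lra) || (right; lra)). Qed.

Lemma seg_height al be a b p : seg a b p ->
  exists t, 0 <= t <= 1 /\ height al be p = height al be a + t * (height al be b - height al be a).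
Proof. intros [t [Ht [Hx Hy]]]. exists t. split; auto. unfold height. rewrite Hx, Hy. ring. Qed.

Lemma seg_height_le al be a b p M : seg a b p -> height al be a <= M -> height al be b <= M ->
  height al be p <= M.
Proof. intros H Ha Hb. destruct (seg_height al be _ _ _ H) as [t [Ht ->]]. nra. Qed.

Section Axis.
Variables al be : R.
Hypothesis Hax : axis al be.

Lemma height_point_at h o : height al be (point_at al be h o) = h.
Proof. unfold height, point_at, px, py; simpl. case_axis Hax; ring. Qed.

Lemma offset_point_at h o : offset al be (point_at al be h o) = o.
Proof. unfold offset, height, point_at, px, py; simpl. case_axis Hax; ring. Qed.

Lemma point_at_coords w : w = point_at al be (height al be w) (offset al be w).
Proof.
  unfold offset, height, point_at. rewrite (pt_eta w) at 1. unfold px, py; simpl.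
  case_axis Hax; f_equal; ring.
Qed.

Lemma point_eq_of_coords u v :
  height al be u = height al be v -> offset al be u = offset al be v -> u = v.
Proof. intros E1 E2. rewrite (point_at_coords u), (point_at_coords v), E1, E2. reflexivity. Qed.

Lemma seg_coords a b w : seg a b w <-> exists t, 0 <= t <= 1 /\
  height al be w = height al be a + t * (height al be b - height al be a) /\
  offset al be w = offset al be a + t * (offset al be b - offset al be a).
Proof.
  split.
  - intros [t [Ht [Hx Hy]]]. exists t. split; auto.
    unfold offset, height. rewrite Hx, Hy. split; ring.
  - intros [t [Ht [E1 E2]]]. exists t. split; auto.
    rewrite (point_at_coords w), E1, E2. unfold point_at, offset, height, px, py; simpl.
    fold (px a) (py a) (px b) (py b). case_axis Hax; split; ring.
Qed.

Lemma seg_level a b w : height al be a = height al be b ->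
  (seg a b w <-> height al be w = height al be a /\
                 between (offset al be a) (offset al be b) (offset al be w)).
Proof.
  intros E. rewrite seg_coords. split.
  - intros [t [Ht [E1 E2]]]. split; [rewrite E1, E; ring|]. rewrite E2. apply between_affine; auto.
  - intros [E1 B]. destruct (between_affine_inv _ _ _ B) as [t [Ht E2]].
    exists t. repeat split; try lra. rewrite E1, E. ring.
Qed.

Lemma seg_level_offset a b w : offset al be a = offset al be b ->
  (seg a b w <-> offset al be w = offset al be a /\
                 between (height al be a) (height al be b) (height al be w)).
Proof.
  intros E. rewrite seg_coords. split.
  - intros [t [Ht [E1 E2]]]. split; [rewrite E2, E; ring|]. rewrite E1. apply between_affine; auto.
  - intros [E1 B]. destruct (between_affine_inv _ _ _ B) as [t [Ht E2]].
    exists t. repeat split; try lra. rewrite E1, E. ring.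
Qed.

Lemma level_aligned a b : height al be a = height al be b -> px a = px b \/ py a = py b.
Proof. unfold height. intros E. case_axis Hax; [right|right|left|left]; lra. Qed.

Lemma aligned_offset_eq u v : (px u = px v \/ py u = py v) ->
  height al be u <> height al be v -> offset al be u = offset al be v.
Proof. unfold offset, height. intros [E|E] N; case_axis Hax; lra. Qed.

Lemma level_collinear a b c : height al be a = height al be b ->
  height al be a = height al be c -> collinear a b c.
Proof.
  unfold collinear, height. intros E1 E2.
  case_axis Hax; [replace (py b) with (py a) by lra; replace (py c) with (py a) by lra
                 |replace (py b) with (py a) by lra; replace (py c) with (py a) by lra
                 |replace (px b) with (px a) by lra; replace (px c) with (px a) by lra
                 |replace (px b) with (px a) by lra; replace (px c) with (px a) by lra]; ring.
Qed.

Lemma dinf_coords_lt z w r : dinf z w < r ->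
  Rabs (height al be w - height al be z) < r /\ Rabs (offset al be w - offset al be z) < r.
Proof.
  unfold dinf, offset, height. intros H.
  pose proof (Rmax_l (Rabs (px w - px z)) (Rabs (py w - py z))).
  pose proof (Rmax_r (Rabs (px w - px z)) (Rabs (py w - py z))).
  case_axis Hax; split; rabs.
Qed.

Lemma offset_bound w K : Rabs (px w) <= K -> Rabs (py w) <= K -> Rabs (offset al be w) <= K.
Proof. unfold offset, height. intros. case_axis Hax; rabs. Qed.

Lemma dot_height_offset a b u v :
  (px b - px a) * (px v - px u) + (py b - py a) * (py v - py u) =
  (height al be b - height al be a) * (height al be v - height al be u) +
  (offset al be b - offset al be a) * (offset al be v - offset al be u).
Proof. unfold offset, height. case_axis Hax; ring. Qed.

End Axis.

(** * Supporting edges *)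

Lemma nxt_lt V i : (0 < nv V)%nat -> (nxt V i < nv V)%nat.
Proof. intros H. unfold nxt. apply Nat.mod_upper_bound. lia. Qed.

Lemma nxt_val V i : (i < nv V)%nat -> nxt V i = if Nat.eq_dec (S i) (nv V) then 0%nat else S i.
Proof.
  intros H. unfold nxt. destruct (Nat.eq_dec (S i) (nv V)) as [E|E].
  - rewrite E. apply Nat.Div0.mod_same.
  - apply Nat.mod_small. lia.
Qed.

Lemma nxt_neq V i : (3 <= nv V)%nat -> (i < nv V)%nat -> nxt V i <> i.
Proof. intros H3 H. rewrite nxt_val by auto. destruct Nat.eq_dec; lia. Qed.

Lemma nxt_nxt_neq V i : (3 <= nv V)%nat -> (i < nv V)%nat -> nxt V (nxt V i) <> i.
Proof.
  intros H3 H. assert (Hn : (nxt V i < nv V)%nat) by (apply nxt_lt; lia).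
  rewrite (nxt_val V (nxt V i)), (nxt_val V i) by auto.
  repeat destruct Nat.eq_dec; lia.
Qed.

Lemma prev_exists V i : (3 <= nv V)%nat -> (i < nv V)%nat ->
  exists j, (j < nv V)%nat /\ nxt V j = i /\ j <> i /\ j <> nxt V i.
Proof.
  intros H3 H. destruct i as [|i].
  - exists (nv V - 1)%nat. rewrite !nxt_val by lia. repeat destruct Nat.eq_dec; repeat split; lia.
  - exists i. rewrite !nxt_val by lia. repeat destruct Nat.eq_dec; repeat split; lia.
Qed.

Lemma vtx_inj V i j : NoDup V -> (i < nv V)%nat -> (j < nv V)%nat -> i <> j ->
  vtx V i <> vtx V j.
Proof. intros Hnd Hi Hj Hij E. apply Hij. exact (proj1 (NoDup_nth V (0, 0)) Hnd i j Hi Hj E). Qed.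

Lemma edge_ends_neq V i : obstacle V -> (i < nv V)%nat -> vtx V i <> vtx V (nxt V i).
Proof.
  intros [[H3 [Hnd _]] _] Hi. apply vtx_inj; auto; [apply nxt_lt; lia|].
  intro E. apply (nxt_neq V i); auto.
Qed.

Lemma edge_in_region V i w : (i < nv V)%nat -> edge_pts V i w -> region V w.
Proof. intros Hi H. left. exists i. auto. Qed.

Definition supporting_edge (V : list pt) (al be : R) (i : nat) : Prop :=
  (i < nv V)%nat /\ forall k, (k < nv V)%nat ->
    height al be (vtx V k) <= height al be (vtx V i) /\
    height al be (vtx V k) <= height al be (vtx V (nxt V i)).

Lemma axis_left : axis (-1) 0. Proof. right. split; [reflexivity | right; reflexivity]. Qed.
Lemma axis_right : axis 1 0. Proof. right. split; [reflexivity | left; reflexivity]. Qed.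
Lemma axis_bottom : axis 0 (-1). Proof. left. split; [reflexivity | right; reflexivity]. Qed.
Lemma axis_top : axis 0 1. Proof. left. split; [reflexivity | left; reflexivity]. Qed.

Lemma left_edge_supporting V i : left_edge V i -> supporting_edge V (-1) 0 i.
Proof. intros [Hi H]. split; auto. intros k Hk. destruct (H k Hk). unfold height. lra. Qed.
Lemma right_edge_supporting V i : right_edge V i -> supporting_edge V 1 0 i.
Proof. intros [Hi H]. split; auto. intros k Hk. destruct (H k Hk). unfold height. lra. Qed.
Lemma bottom_edge_supporting V i : bottom_edge V i -> supporting_edge V 0 (-1) i.
Proof. intros [Hi H]. split; auto. intros k Hk. destruct (H k Hk). unfold height. lra. Qed.
Lemma top_edge_supporting V i : top_edge V i -> supporting_edge V 0 1 i.
Proof. intros [Hi H]. split; auto. intros k Hk. destruct (H k Hk). unfold height. lra. Qed.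

Lemma supporting_edge_level V al be i : supporting_edge V al be i ->
  height al be (vtx V i) = height al be (vtx V (nxt V i)).
Proof.
  intros [Hi H]. destruct (H i Hi). destruct (H (nxt V i) (nxt_lt V i ltac:(lia))). lra.
Qed.

Lemma affine_path_cont (x0 y0 A B : R) : cont01 (fun t => (x0 + t * A, y0 + t * B)).
Proof.
  intros t Ht eps He. exists (eps / (Rabs A + Rabs B + 1)).
  pose proof (Rabs_pos A). pose proof (Rabs_pos B). split.
  - apply Rdiv_lt_0_compat; lra.
  - intros s Hs Hst. unfold dinf, px, py; simpl.
    replace (x0 + t * A - (x0 + s * A)) with ((t - s) * A) by ring.
    replace (y0 + t * B - (y0 + s * B)) with ((t - s) * B) by ring.
    rewrite !Rabs_mult, Rabs_minus_sym. pose proof (Rabs_pos (s - t)).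
    assert (Hk : Rabs (s - t) * (Rabs A + Rabs B + 1) < eps).
    { apply Rmult_lt_reg_r with (/ (Rabs A + Rabs B + 1)).
      - apply Rinv_0_lt_compat; lra.
      - rewrite Rmult_assoc, Rinv_r by lra. lra. }
    apply Rmax_lub_lt; nra.
Qed.

Lemma region_highest_on_boundary V al be p : axis al be -> region V p ->
  (forall w, on_boundary V w -> height al be w <= height al be p) -> on_boundary V p.
Proof.
  intros Hax [Hb|[Hnb [M HM]]] Hw; [exact Hb|exfalso].
  set (K := Rabs M + Rabs (px p) + Rabs (py p) + 1).
  assert (HK : K > 0)
    by (unfold K; pose proof (Rabs_pos M); pose proof (Rabs_pos (px p)); pose proof (Rabs_pos (py p)); lra).
  set (g := fun t => (px p + t * (K * al), py p + t * (K * be))).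
  assert (Hg0 : g 0 = p) by (unfold g; rewrite (pt_eta p) at 3; f_equal; ring).
  (* The ray from p in direction (al, be) stays above height p, hence off the boundary,
     and leaves every bounded set. *)
  assert (Hr : reach_off V p (g 1)).
  { exists g. split; [apply affine_path_cont|]. repeat split; auto. intros t Ht Hbt.
    destruct (Req_dec t 0) as [->|E]; [rewrite Hg0 in Hbt; contradiction|].
    specialize (Hw _ Hbt). unfold height, g, px, py in Hw. simpl in Hw. fold (px p) (py p) in Hw.
    case_axis Hax; nra. }
  destruct (HM _ Hr) as [H1 H2]. unfold g, px, py in H1, H2; simpl in H1, H2.
  fold (px p) (py p) in H1, H2. unfold K in *. case_axis Hax; rabs.
Qed.

Lemma seg_max_cases al be a b w M : seg a b w ->
  height al be a <= M -> height al be b <= M -> M <= height al be w ->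
  (height al be a = M /\ w = a) \/ (height al be b = M /\ w = b) \/
  (height al be a = M /\ height al be b = M).
Proof.
  intros [t [Ht [Hx Hy]]] Ha Hb HM.
  destruct (Req_dec t 0) as [T0|T0]; [|destruct (Req_dec t 1) as [T1|T1]].
  - assert (w = a) by (rewrite (pt_eta w), (pt_eta a), Hx, Hy, T0; f_equal; ring).
    subst w. left. split; [lra | reflexivity].
  - assert (w = b) by (rewrite (pt_eta w), (pt_eta b), Hx, Hy, T1; f_equal; ring).
    subst w. right; left. split; [lra | reflexivity].
  - right; right. assert (Et : height al be w = height al be a + t * (height al be b - height al be a))
      by (unfold height; rewrite Hx, Hy; ring).
    split; nra.
Qed.

Section Supporting.
Variables (V : list pt) (al be : R) (i : nat).
Hypothesis Hax : axis al be.
Hypothesis Hsup : supporting_edge V al be i.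

Lemma boundary_height_le w : on_boundary V w -> height al be w <= height al be (vtx V i).
Proof.
  destruct Hsup as [Hi HE]. intros [j [Hj Hw]].
  apply (seg_height_le _ _ _ _ _ _ Hw); apply HE; [exact Hj | apply nxt_lt; lia].
Qed.

Lemma region_height_le w : region V w -> height al be w <= height al be (vtx V i).
Proof.
  intros Hr. destruct (classic (on_boundary V w)) as [Hb|Hb]; [exact (boundary_height_le w Hb)|].
  destruct (Rle_dec (height al be w) (height al be (vtx V i))) as [|Hn]; auto.
  exfalso. apply Hb, (region_highest_on_boundary V al be w Hax Hr).
  intros u Hu. pose proof (boundary_height_le u Hu). lra.
Qed.

Hypothesis Hob : obstacle V.

Lemma highest_vertex_on_edge k : (k < nv V)%nat ->
  height al be (vtx V i) <= height al be (vtx V k) -> edge_pts V i (vtx V k).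
Proof.
  destruct Hob as [[H3 _] Hgp]. destruct Hsup as [Hi HE]. intros Hk Hge.
  assert (Hn : (nxt V i < nv V)%nat) by (apply nxt_lt; lia).
  destruct (Nat.eq_dec k i) as [->|Nki]; [apply seg_start|].
  destruct (Nat.eq_dec k (nxt V i)) as [->|Nkn]; [apply seg_end|].
  exfalso. apply (Hgp i (nxt V i) k Hi Hn Hk); auto.
  - intro E. apply (nxt_neq V i); auto.
  - destruct (HE i Hi), (HE (nxt V i) Hn), (HE k Hk).
    apply level_collinear with al be; auto; lra.
Qed.

Lemma boundary_highest_on_edge w : on_boundary V w ->
  height al be (vtx V i) <= height al be w -> edge_pts V i w.
Proof.
  intros [j [Hj Hw]] Hge. destruct Hsup as [Hi HE].
  assert (Hnj : (nxt V j < nv V)%nat) by (destruct Hob as [[H3 _] _]; apply nxt_lt; lia).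
  destruct (HE j Hj) as [Hu _]. destruct (HE (nxt V j) Hnj) as [Hv _].
  destruct (seg_max_cases al be _ _ _ _ Hw Hu Hv Hge) as [[Eu ->]|[[Ev ->]|[Eu Ev]]].
  - apply highest_vertex_on_edge; auto; lra.
  - apply highest_vertex_on_edge; auto; lra.
  - apply (seg_subset _ _ _ _ (highest_vertex_on_edge j Hj ltac:(lra))
                             (highest_vertex_on_edge _ Hnj ltac:(lra)) w Hw).
Qed.

Lemma region_highest_on_edge w : region V w ->
  height al be (vtx V i) <= height al be w -> edge_pts V i w.
Proof.
  intros Hr Hge. apply boundary_highest_on_edge; auto.
  apply (region_highest_on_boundary V al be w Hax Hr).
  intros u Hu. pose proof (boundary_height_le u Hu). lra.
Qed.

End Supporting.

(** * Rectilinear convexity and chords *)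

Lemma seg_between_x a b w : seg a b w -> between (px a) (px b) (px w).
Proof. intros [t [Ht [Hx _]]]. rewrite Hx. apply between_affine; auto. Qed.

Lemma seg_between_y a b w : seg a b w -> between (py a) (py b) (py w).
Proof. intros [t [Ht [_ Hy]]]. rewrite Hy. apply between_affine; auto. Qed.

Fixpoint on_rpath (a : pt) (l : list pt) (w : pt) : Prop :=
  match l with
  | nil => w = a
  | b :: l' => seg a b w \/ on_rpath b l' w
  end.

Lemma last_cons_default (b : pt) l d d' : last (b :: l) d = last (b :: l) d'.
Proof.
  revert b. induction l as [|c l IH]; intros b; simpl; auto.
  destruct l; auto. apply (IH c).
Qed.

Lemma rpath_in_on A a l w : rpath_in A a l -> A a -> on_rpath a l w -> A w.
Proof.
  revert a. induction l as [|b l IH]; intros a Hp Ha Hw; simpl in Hw.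
  - subst. exact Ha.
  - destruct Hp as [_ [Hs Hp]]. destruct Hw as [Hw|Hw]; [exact (Hs w Hw)|].
    exact (IH b Hp (Hs b (seg_end a b)) Hw).
Qed.

Lemma l1_triangle a b c : l1 a c <= l1 a b + l1 b c.
Proof. unfold l1. rabs. Qed.

Lemma rpath_len_ge a l : l1 a (last (a :: l) a) <= rpath_len a l.
Proof.
  revert a. induction l as [|b l IH]; intros a.
  - simpl. unfold l1. rewrite !Rminus_diag, Rabs_R0. lra.
  - change (l1 a (last (b :: l) a) <= l1 a b + rpath_len b l).
    rewrite (last_cons_default b l a b). pose proof (IH b). pose proof (l1_triangle a b (last (b :: l) b)).
    lra.
Qed.

Lemma l1_additive_between a b v : l1 a b + l1 b v = l1 a v ->
  between (px a) (px v) (px b) /\ between (py a) (py v) (py b).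
Proof.
  unfold l1, between, Rabs. intros H. repeat destruct Rcase_abs;
  split; first [left; lra | right; lra].
Qed.

Lemma shortest_rpath_in_box a l w : rpath_len a l = l1 a (last (a :: l) a) -> on_rpath a l w ->
  between (px a) (px (last (a :: l) a)) (px w) /\ between (py a) (py (last (a :: l) a)) (py w).
Proof.
  revert a. induction l as [|b l IH]; intros a Hlen Hw.
  - simpl in Hw |- *. subst. split; left; lra.
  - change (l1 a b + rpath_len b l = l1 a (last (b :: l) a)) in Hlen.
    change (seg a b w \/ on_rpath b l w) in Hw.
    change (last (a :: b :: l) a) with (last (b :: l) a).
    rewrite (last_cons_default b l a b) in *.
    pose proof (rpath_len_ge b l). pose proof (l1_triangle a b (last (b :: l) b)).
    assert (Hb : rpath_len b l = l1 b (last (b :: l) b)) by lra.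
    destruct (l1_additive_between a b (last (b :: l) b) ltac:(lra)) as [Bx By].
    destruct Hw as [Hw|Hw].
    + pose proof (seg_between_x _ _ _ Hw). pose proof (seg_between_y _ _ _ Hw).
      split; solve_between.
    + destruct (IH b Hb Hw). split; solve_between.
Qed.

Lemma rpath_hits_level al be a l c :
  between (height al be a) (height al be (last (a :: l) a)) c ->
  exists w, on_rpath a l w /\ height al be w = c.
Proof.
  revert a. induction l as [|b l IH]; intros a Hc.
  - exists a. split; [reflexivity|]. simpl in Hc. destruct Hc; lra.
  - change (last (a :: b :: l) a) with (last (b :: l) a) in Hc.
    rewrite (last_cons_default b l a b) in Hc.
    destruct (classic (between (height al be a) (height al be b) c)) as [B|B].
    + destruct (between_affine_inv _ _ _ B) as [t [Ht Ec]].
      exists (px a + t * (px b - px a), py a + t * (py b - py a)). split.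
      * left. exists t. split; [exact Ht | split; reflexivity].
      * rewrite Ec. unfold height, px, py; simpl. ring.
    + destruct (IH b) as [w [Hw Ew]]; [solve_between|]. exists w. split; [right|]; assumption.
Qed.

Lemma rect_convex_cross_row V u v y : rect_convex V -> region V u -> region V v ->
  between (py u) (py v) y -> exists x, between (px u) (px v) x /\ region V (x, y).
Proof.
  intros Hc Hu Hv Hy. destruct (Hc u v Hu Hv) as [l [Hp [Hl Hlen]]].
  destruct (rpath_hits_level 0 1 u l y) as [w [Hw Ew]].
  { rewrite Hl. unfold height. replace (0 * px u + 1 * py u) with (py u) by ring.
    replace (0 * px v + 1 * py v) with (py v) by ring. exact Hy. }
  rewrite <- Hl in Hlen. destruct (shortest_rpath_in_box u l w Hlen Hw) as [Bx _].
  rewrite Hl in Bx. exists (px w). split; [exact Bx|].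
  replace y with (py w) by (unfold height in Ew; lra). rewrite <- pt_eta.
  exact (rpath_in_on _ _ _ _ Hp Hu Hw).
Qed.

Lemma rect_convex_cross_column V u v x : rect_convex V -> region V u -> region V v ->
  between (px u) (px v) x -> exists y, between (py u) (py v) y /\ region V (x, y).
Proof.
  intros Hc Hu Hv Hx. destruct (Hc u v Hu Hv) as [l [Hp [Hl Hlen]]].
  destruct (rpath_hits_level 1 0 u l x) as [w [Hw Ew]].
  { rewrite Hl. unfold height. replace (1 * px u + 0 * py u) with (px u) by ring.
    replace (1 * px v + 0 * py v) with (px v) by ring. exact Hx. }
  rewrite <- Hl in Hlen. destruct (shortest_rpath_in_box u l w Hlen Hw) as [_ By].
  rewrite Hl in By. exists (py w). split; [exact By|].
  replace x with (px w) by (unfold height in Ew; lra). rewrite <- pt_eta.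
  exact (rpath_in_on _ _ _ _ Hp Hu Hw).
Qed.

Lemma rect_convex_level_seg V al be u v : axis al be -> rect_convex V -> region V u -> region V v ->
  height al be u = height al be v -> subset (seg u v) (region V).
Proof.
  intros Hax Hc Hu Hv E w Hw. destruct (level_aligned al be Hax u v E) as [Ex|Ey].
  - apply seg_vertical in Hw; auto. destruct Hw as [Hx Hy].
    destruct (rect_convex_cross_row V u v (py w) Hc Hu Hv Hy) as [x [Bx Hr]].
    rewrite (pt_eta w). replace (px w) with x by solve_between. exact Hr.
  - apply seg_horizontal in Hw; auto. destruct Hw as [Hy Hx].
    destruct (rect_convex_cross_column V u v (px w) Hc Hu Hv Hx) as [y [By Hr]].
    rewrite (pt_eta w). replace (py w) with y by solve_between. exact Hr.
Qed.

Lemma visibility_edge_covers_level V al be a b : axis al be -> rect_convex V ->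
  visibility_edge (region V) a b -> height al be a = height al be b ->
  forall w, region V w -> height al be w = height al be a -> seg a b w.
Proof.
  intros Hax Hc [_ [Hs Hmax]] E w Hw Ew.
  assert (Ra : region V a) by apply Hs, seg_start.
  assert (Rb : region V b) by apply Hs, seg_end.
  destruct (classic (between (offset al be a) (offset al be b) (offset al be w))) as [B|B].
  { apply (seg_level al be Hax a b w E); auto. }
  destruct (classic (between (offset al be a) (offset al be w) (offset al be b))) as [B2|B2].
  - assert (Sub : subset (seg a b) (seg a w)).
    { intros u Hu. apply (seg_level al be Hax a b u E) in Hu. destruct Hu.
      apply (seg_level al be Hax a w u ltac:(lra)). split; [auto | solve_between]. }
    apply (Hmax a w Sub (rect_convex_level_seg V al be a w Hax Hc Ra Hw ltac:(lra))), seg_end.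
  - assert (Sub : subset (seg a b) (seg b w)).
    { intros u Hu. apply (seg_level al be Hax a b u E) in Hu. destruct Hu.
      apply (seg_level al be Hax b w u ltac:(lra)). split; [lra | solve_between]. }
    apply (Hmax b w Sub (rect_convex_level_seg V al be b w Hax Hc Rb Hw ltac:(lra))), seg_end.
Qed.

Lemma perp_ext_vis_edge_inside V s i :
  perp_ext_vis_edge V s i -> fst s <> snd s /\ subset (seg_of s) (region V).
Proof. destruct s as [a b]. intros [[Hab [Hs _]] _]. split; assumption. Qed.

Lemma perp_ext_vis_edge_chord V s i al be : obstacle V -> rect_convex V -> axis al be ->
  (i < nv V)%nat -> height al be (vtx V i) = height al be (vtx V (nxt V i)) ->
  perp_ext_vis_edge V s i ->
  exists e0, edge_pts V i e0 /\
    forall w, region V w -> offset al be w = offset al be e0 -> seg_of s w.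
Proof.
  intros Hob Hc Hax Hi Eh. destruct s as [a b]. intros [Hv [He Hd]].
  set (u := vtx V i) in *. set (v := vtx V (nxt V i)) in *.
  assert (Nuv : offset al be u <> offset al be v)
    by (intro E; exact (edge_ends_neq V i Hob Hi (point_eq_of_coords al be Hax u v Eh E))).
  assert (Eab : offset al be a = offset al be b).
  { rewrite (dot_height_offset al be Hax a b u v), Eh, Rminus_diag, Rmult_0_r, Rplus_0_l in Hd.
    apply Rmult_integral in Hd. destruct Hd as [Hd|Hd]; [lra | exfalso; apply Nuv; lra]. }
  pose proof (visibility_edge_covers_level V (- be) al a b (axis_rot al be Hax) Hc Hv Eab) as Hcov.
  destruct He as [He|He]; [exists a | exists b]; split; auto; intros w Hw Ew; apply Hcov; auto.
  unfold offset in Ew, Eab. lra.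
Qed.

Lemma vertical_edge_chord V s i : obstacle V -> rect_convex V -> (i < nv V)%nat ->
  px (vtx V i) = px (vtx V (nxt V i)) -> perp_ext_vis_edge V s i ->
  exists e0, edge_pts V i e0 /\ forall w, region V w -> py w = py e0 -> seg_of s w.
Proof.
  intros Hob Hc Hi E Hp.
  destruct (perp_ext_vis_edge_chord V s i 1 0 Hob Hc axis_right Hi) as [e0 [He Hcov]];
    [unfold height; lra | exact Hp |].
  exists e0. split; auto. intros w Hw Ew. apply Hcov; auto. unfold offset, height. lra.
Qed.

Lemma horizontal_edge_chord V s i : obstacle V -> rect_convex V -> (i < nv V)%nat ->
  py (vtx V i) = py (vtx V (nxt V i)) -> perp_ext_vis_edge V s i ->
  exists e0, edge_pts V i e0 /\ forall w, region V w -> px w = px e0 -> seg_of s w.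
Proof.
  intros Hob Hc Hi E Hp.
  destruct (perp_ext_vis_edge_chord V s i 0 1 Hob Hc axis_top Hi) as [e0 [He Hcov]];
    [unfold height; lra | exact Hp |].
  exists e0. split; auto. intros w Hw Ew. apply Hcov; auto. unfold offset, height. lra.
Qed.

(** * L-paths cross chord lines *)

Definition interior2 (Rg : R -> R -> Prop) (x y : R) : Prop :=
  exists e, 0 < e /\ forall dx dy, Rabs dx < e -> Rabs dy < e -> Rg (x + dx) (y + dy).

Definition on_hv (a1 b1 a2 b2 x y : R) : Prop :=
  (y = b1 /\ between a1 a2 x) \/ (x = a2 /\ between b1 b2 y).
Definition on_vh (a1 b1 a2 b2 x y : R) : Prop :=
  (x = a1 /\ between b1 b2 y) \/ (y = b2 /\ between a1 a2 x).

Lemma interior2_in Rg x y : interior2 Rg x y -> Rg x y.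
Proof.
  intros [e [He H]]. specialize (H 0 0). rewrite !Rplus_0_r in H. apply H; rewrite Rabs_R0; lra.
Qed.

Lemma interior2_transpose Rg x y : interior2 (fun a b => Rg b a) y x -> interior2 Rg x y.
Proof.
  intros [e [He H]]. exists e. split; [exact He|]. intros dx dy Hx Hy. exact (H dy dx Hy Hx).
Qed.

Lemma interior2_row_shadow Rg (P : R -> Prop) X x y x' :
  (forall x y x', Rg x y -> P y -> between x X x' -> Rg x' y) ->
  (exists d, 0 < d /\ forall y', Rabs (y' - y) < d -> P y') ->
  interior2 Rg x y -> between x X x' -> x' <> X -> interior2 Rg x' y.
Proof.
  intros Hsh [d [Hd HP]] [e [He H]] Hb Hn.
  assert (HX : 0 < Rabs (x' - X)) by (apply Rabs_pos_lt; lra).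
  exists (Rmin e (Rmin d (Rabs (x' - X)))). split; [repeat apply Rmin_glb_lt; lra|].
  intros dx dy Hdx Hdy.
  pose proof (Rmin_l e (Rmin d (Rabs (x' - X)))). pose proof (Rmin_r e (Rmin d (Rabs (x' - X)))).
  pose proof (Rmin_l d (Rabs (x' - X))). pose proof (Rmin_r d (Rabs (x' - X))).
  apply Hsh with (x + dx).
  - apply H; lra.
  - apply HP. replace (y + dy - y) with dy by ring. lra.
  - unfold between in *. rabs.
Qed.

Lemma interior2_column_shadow Rg (P : R -> Prop) Y x y y' :
  (forall x y y', Rg x y -> P x -> between y Y y' -> Rg x y') ->
  (exists d, 0 < d /\ forall x', Rabs (x' - x) < d -> P x') ->
  interior2 Rg x y -> between y Y y' -> y' <> Y -> interior2 Rg x y'.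
Proof.
  intros Hsh HP [e [He H]] Hb Hn. apply interior2_transpose.
  apply (interior2_row_shadow (fun a b => Rg b a) P Y y x y'); [intros a b c; apply Hsh | exact HP | | exact Hb | exact Hn].
  exists e. split; [exact He|]. intros dx dy Hx Hy. exact (H dy dx Hy Hx).
Qed.

(* One leg of an L-path, on its own line: [G] and [I] are ω and its interior there, [xe] is
   the non-interior end of the leg, [xm] its corner, and the shadow of the interior point [xz]
   reaches the chord line [t]. *)
Lemma leg_shadow (G I : R -> Prop) (t xz xe xm : R) :
  (forall x, I x -> G x) -> I xz -> ~ I xe -> between xe xm xz ->
  (forall x, between xz t x -> G x) ->
  (forall x, between xz t x -> x <> t -> I x) ->
  ~ (between xe xm t /\ G t) ->
  ((xz < t -> xe < xz /\ xz <= xm < t) /\ (t < xz -> xz < xe /\ t < xm <= xz)) /\ I xm.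
Proof.
  intros IG Iz Ne Bz SG SI NH.
  assert (Gt : G t) by (apply SG; unfold between; lra).
  assert (Ht : ~ between xe xm t) by (intro; apply NH; auto).
  assert (Nzt : xz <> t) by (intro; subst; apply Ht; auto).
  assert (Nez : xe <> xz) by (intro; subst; contradiction).
  unfold between in *.
  destruct (Rlt_or_le xz t) as [C|C].
  - assert (xe < xz).
    { destruct (Rlt_or_le xe xz) as [|C2]; auto. exfalso.
      destruct (Rlt_or_le xe t).
      + apply Ne, SI; lra.
      + apply Ht. lra. }
    assert (xz <= xm < t).
    { split; [lra|]. destruct (Rlt_or_le xm t); auto. exfalso. apply Ht. lra. }
    split; [split; intros; lra|]. destruct (Req_dec xm xz) as [->|]; auto. apply SI; lra.
  - assert (xz < xe).
    { destruct (Rlt_or_le xz xe) as [|C2]; auto. exfalso.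
      destruct (Rlt_or_le t xe).
      + apply Ne, SI; lra.
      + apply Ht. lra. }
    assert (t < xm <= xz).
    { split; [|lra]. destruct (Rlt_or_le t xm); auto. exfalso. apply Ht. lra. }
    split; [split; intros; lra|]. destruct (Req_dec xm xz) as [->|]; auto. apply SI; lra.
Qed.

(* [Rg] is ω in coordinates and x = X1, x = X2, y = Y1, y = Y2 are the chord lines; the
   shadow of a point toward a chord line is its row or column segment to that line. *)
Section Shadows.
Variable Rg : R -> R -> Prop.
Variables X1 X2 Y1 Y2 : R.
Hypothesis HX : X1 < X2.
Hypothesis HY : Y1 < Y2.
Hypothesis shadow_X1 : forall x y x', Rg x y -> Y1 <= y -> between x X1 x' -> Rg x' y.
Hypothesis shadow_X2 : forall x y x', Rg x y -> y <= Y2 -> between x X2 x' -> Rg x' y.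
Hypothesis shadow_Y1 : forall x y y', Rg x y -> x <= X2 -> between y Y1 y' -> Rg x y'.
Hypothesis shadow_Y2 : forall x y y', Rg x y -> X1 <= x -> between y Y2 y' -> Rg x y'.

Lemma interior_toward_X1 x y x' :
  interior2 Rg x y -> Y1 < y -> between x X1 x' -> x' <> X1 -> interior2 Rg x' y.
Proof.
  intros I Hy. apply (interior2_row_shadow Rg (fun y => Y1 <= y) X1 x y x' shadow_X1); auto.
  exists (y - Y1). split; [lra|]. intros y' H. rabs.
Qed.

Lemma interior_toward_X2 x y x' :
  interior2 Rg x y -> y < Y2 -> between x X2 x' -> x' <> X2 -> interior2 Rg x' y.
Proof.
  intros I Hy. apply (interior2_row_shadow Rg (fun y => y <= Y2) X2 x y x' shadow_X2); auto.
  exists (Y2 - y). split; [lra|]. intros y' H. rabs.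
Qed.

Lemma interior_toward_Y1 x y y' :
  interior2 Rg x y -> x < X2 -> between y Y1 y' -> y' <> Y1 -> interior2 Rg x y'.
Proof.
  intros I Hx. apply (interior2_column_shadow Rg (fun x => x <= X2) Y1 x y y' shadow_Y1); auto.
  exists (X2 - x). split; [lra|]. intros x' H. rabs.
Qed.

Lemma interior_toward_Y2 x y y' :
  interior2 Rg x y -> X1 < x -> between y Y2 y' -> y' <> Y2 -> interior2 Rg x y'.
Proof.
  intros I Hx. apply (interior2_column_shadow Rg (fun x => X1 <= x) Y2 x y y' shadow_Y2); auto.
  exists (x - X1). split; [lra|]. intros x' H. rabs.
Qed.

Lemma row_leg_toward_X1 y xz xe xm : Y1 < y -> interior2 Rg xz y -> ~ interior2 Rg xe y ->
  between xe xm xz -> ~ (between xe xm X1 /\ Rg X1 y) ->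
  ((xz < X1 -> xe < xz /\ xz <= xm < X1) /\ (X1 < xz -> xz < xe /\ X1 < xm <= xz)) /\
  interior2 Rg xm y.
Proof.
  intros Hy Iz Ne Bz NH. apply (leg_shadow (fun x => Rg x y) (fun x => interior2 Rg x y)); auto.
  - intros x. apply interior2_in.
  - intros x Hx. apply shadow_X1 with xz; [apply interior2_in; exact Iz | lra | exact Hx].
  - intros x Hx Hn. apply interior_toward_X1 with xz; auto.
Qed.

Lemma row_leg_toward_X2 y xz xe xm : y < Y2 -> interior2 Rg xz y -> ~ interior2 Rg xe y ->
  between xe xm xz -> ~ (between xe xm X2 /\ Rg X2 y) ->
  ((xz < X2 -> xe < xz /\ xz <= xm < X2) /\ (X2 < xz -> xz < xe /\ X2 < xm <= xz)) /\
  interior2 Rg xm y.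
Proof.
  intros Hy Iz Ne Bz NH. apply (leg_shadow (fun x => Rg x y) (fun x => interior2 Rg x y)); auto.
  - intros x. apply interior2_in.
  - intros x Hx. apply shadow_X2 with xz; [apply interior2_in; exact Iz | lra | exact Hx].
  - intros x Hx Hn. apply interior_toward_X2 with xz; auto.
Qed.

Lemma column_leg_toward_Y1 x yz ye ym : x < X2 -> interior2 Rg x yz -> ~ interior2 Rg x ye ->
  between ye ym yz -> ~ (between ye ym Y1 /\ Rg x Y1) ->
  ((yz < Y1 -> ye < yz /\ yz <= ym < Y1) /\ (Y1 < yz -> yz < ye /\ Y1 < ym <= yz)) /\
  interior2 Rg x ym.
Proof.
  intros Hx Iz Ne Bz NH. apply (leg_shadow (fun y => Rg x y) (fun y => interior2 Rg x y)); auto.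
  - intros y. apply interior2_in.
  - intros y Hy. apply shadow_Y1 with yz; [apply interior2_in; exact Iz | lra | exact Hy].
  - intros y Hy Hn. apply interior_toward_Y1 with yz; auto.
Qed.

Lemma column_leg_toward_Y2 x yz ye ym : X1 < x -> interior2 Rg x yz -> ~ interior2 Rg x ye ->
  between ye ym yz -> ~ (between ye ym Y2 /\ Rg x Y2) ->
  ((yz < Y2 -> ye < yz /\ yz <= ym < Y2) /\ (Y2 < yz -> yz < ye /\ Y2 < ym <= yz)) /\
  interior2 Rg x ym.
Proof.
  intros Hx Iz Ne Bz NH. apply (leg_shadow (fun y => Rg x y) (fun y => interior2 Rg x y)); auto.
  - intros y. apply interior2_in.
  - intros y Hy. apply shadow_Y2 with yz; [apply interior2_in; exact Iz | lra | exact Hy].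
  - intros y Hy Hn. apply interior_toward_Y2 with yz; auto.
Qed.

Definition avoids_chord_lines (a1 b1 a2 b2 : R) : Prop :=
  forall x y, on_hv a1 b1 a2 b2 x y -> Rg x y -> x <> X1 /\ x <> X2 /\ y <> Y1 /\ y <> Y2.

Lemma avoids_on_row a1 b1 a2 b2 X : avoids_chord_lines a1 b1 a2 b2 -> X = X1 \/ X = X2 ->
  ~ (between a1 a2 X /\ Rg X b1).
Proof.
  intros Hav HX' [B Hr]. destruct (Hav X b1 (or_introl (conj eq_refl B)) Hr) as (n1 & n2 & _).
  destruct HX'; contradiction.
Qed.

Lemma avoids_on_column a1 b1 a2 b2 Y : avoids_chord_lines a1 b1 a2 b2 -> Y = Y1 \/ Y = Y2 ->
  ~ (between b2 b1 Y /\ Rg a2 Y).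
Proof.
  intros Hav HY' [B Hr].
  destruct (Hav a2 Y (or_intror (conj eq_refl (between_sym _ _ _ B))) Hr) as (_ & _ & n3 & n4).
  destruct HY'; contradiction.
Qed.

Ltac try_shadow H :=
  first [ apply (interior_toward_Y1 _ _ _ H); [lra | solve_between | intro; lra]
        | apply (interior_toward_Y2 _ _ _ H); [lra | solve_between | intro; lra]
        | apply (interior_toward_X1 _ _ _ H); [lra | solve_between | intro; lra]
        | apply (interior_toward_X2 _ _ _ H); [lra | solve_between | intro; lra] ].
Ltac use_order_facts :=
  repeat match goal with
  | H : ?u < ?v -> _ |- _ =>
      first [ let h := fresh in assert (h : u < v) by lra; specialize (H h) | clear H ]
  | H : _ /\ _ |- _ => destruct H
  end.
Ltac split3 u A B := destruct (Rlt_or_le u A); [|destruct (Rlt_or_le u B)].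

Lemma avoiding_row_leg_absurd a1 b1 a2 b2 xz :
  avoids_chord_lines a1 b1 a2 b2 -> ~ interior2 Rg a1 b1 -> ~ interior2 Rg a2 b2 ->
  between a1 a2 xz -> interior2 Rg xz b1 ->
  (exists x y, on_vh a1 b1 a2 b2 x y /\ interior2 Rg x y) -> False.
Proof.
  intros Hav Np Nq Bz Iz [x' [y' [Hz' Iz']]].
  destruct (Hav xz b1 (or_introl (conj eq_refl Bz)) (interior2_in _ _ _ Iz)) as (n1 & n2 & n3 & n4).
  pose proof (fun Hy => row_leg_toward_X1 b1 xz a1 a2 Hy Iz Np Bz
                          (avoids_on_row _ _ _ _ X1 Hav (or_introl eq_refl))) as FA1.
  pose proof (fun Hy => row_leg_toward_X2 b1 xz a1 a2 Hy Iz Np Bz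
                          (avoids_on_row _ _ _ _ X2 Hav (or_intror eq_refl))) as FA2.
  assert (Ic : interior2 Rg a2 b1)
    by (destruct (Rlt_or_le Y1 b1); [apply (proj2 (FA1 ltac:(lra))) | apply (proj2 (FA2 ltac:(lra)))]).
  pose proof (between_right b2 b1) as Bc.
  destruct (Hav a2 b1 (or_introl (conj eq_refl (between_right a1 a2))) (interior2_in _ _ _ Ic))
    as (m1 & m2 & _ & _).
  pose proof (fun Hx => column_leg_toward_Y1 a2 b1 b2 b1 Hx Ic Nq Bc
                          (avoids_on_column _ _ _ _ Y1 Hav (or_introl eq_refl))) as FC1.
  pose proof (fun Hx => column_leg_toward_Y2 a2 b1 b2 b1 Hx Ic Nq Bc
                          (avoids_on_column _ _ _ _ Y2 Hav (or_intror eq_refl))) as FC2.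
  clear Hav Ic Bc.
  (* In each configuration allowed by the order facts, a shadow of z' reaches p or q. *)
  destruct Hz' as [[-> By]|[-> Bx]]; unfold between in *.
  - split3 b1 Y1 Y2; split3 xz X1 X2; split3 a2 X1 X2; destruct Bz; destruct By;
      use_order_facts; try lra; apply Np; try_shadow Iz'.
  - split3 b1 Y1 Y2; split3 xz X1 X2; split3 a2 X1 X2; destruct Bz; destruct Bx;
      use_order_facts; try lra; apply Nq; try_shadow Iz'.
Qed.

Lemma avoiding_column_leg_absurd a1 b1 a2 b2 yz :
  avoids_chord_lines a1 b1 a2 b2 -> ~ interior2 Rg a1 b1 -> ~ interior2 Rg a2 b2 ->
  between b1 b2 yz -> interior2 Rg a2 yz ->
  (exists x y, on_vh a1 b1 a2 b2 x y /\ interior2 Rg x y) -> False.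
Proof.
  intros Hav Np Nq Bz Iz [x' [y' [Hz' Iz']]].
  destruct (Hav a2 yz (or_intror (conj eq_refl Bz)) (interior2_in _ _ _ Iz)) as (n1 & n2 & n3 & n4).
  pose proof (between_sym _ _ _ Bz) as Bz'.
  pose proof (fun Hx => column_leg_toward_Y1 a2 yz b2 b1 Hx Iz Nq Bz'
                          (avoids_on_column _ _ _ _ Y1 Hav (or_introl eq_refl))) as FB1.
  pose proof (fun Hx => column_leg_toward_Y2 a2 yz b2 b1 Hx Iz Nq Bz'
                          (avoids_on_column _ _ _ _ Y2 Hav (or_intror eq_refl))) as FB2.
  assert (Ic : interior2 Rg a2 b1)
    by (destruct (Rlt_or_le a2 X2); [apply (proj2 (FB1 ltac:(lra))) | apply (proj2 (FB2 ltac:(lra)))]).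
  pose proof (between_right a1 a2) as Bc.
  destruct (Hav a2 b1 (or_introl (conj eq_refl Bc)) (interior2_in _ _ _ Ic)) as (_ & _ & m3 & m4).
  pose proof (fun Hy => row_leg_toward_X1 b1 a2 a1 a2 Hy Ic Np Bc
                          (avoids_on_row _ _ _ _ X1 Hav (or_introl eq_refl))) as FR1.
  pose proof (fun Hy => row_leg_toward_X2 b1 a2 a1 a2 Hy Ic Np Bc
                          (avoids_on_row _ _ _ _ X2 Hav (or_intror eq_refl))) as FR2.
  clear Hav Ic Bc Bz'.
  destruct Hz' as [[-> By]|[-> Bx]]; unfold between in *.
  - split3 b1 Y1 Y2; split3 yz Y1 Y2; split3 a2 X1 X2; destruct Bz; destruct By;
      use_order_facts; try lra; apply Np; try_shadow Iz'.
  - split3 b1 Y1 Y2; split3 yz Y1 Y2; split3 a2 X1 X2; destruct Bz; destruct Bx;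
      use_order_facts; try lra; apply Nq; try_shadow Iz'.
Qed.

Theorem hv_path_meets_chord_lines a1 b1 a2 b2 : ~ interior2 Rg a1 b1 -> ~ interior2 Rg a2 b2 ->
  (exists x y, on_hv a1 b1 a2 b2 x y /\ interior2 Rg x y) ->
  (exists x y, on_vh a1 b1 a2 b2 x y /\ interior2 Rg x y) ->
  exists x y, on_hv a1 b1 a2 b2 x y /\ Rg x y /\ (x = X1 \/ x = X2 \/ y = Y1 \/ y = Y2).
Proof.
  intros Np Nq [xz [yz [Hz Iz]]] Hz'. apply NNPP. intros NH.
  assert (Hav : avoids_chord_lines a1 b1 a2 b2)
    by (intros x y Ho Hr; repeat split; intros E; apply NH; exists x, y; auto 6).
  destruct Hz as [[-> Bz]|[-> Bz]].
  - exact (avoiding_row_leg_absurd _ _ _ _ _ Hav Np Nq Bz Iz Hz').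
  - exact (avoiding_column_leg_absurd _ _ _ _ _ Hav Np Nq Bz Iz Hz').
Qed.

End Shadows.

Section Staircase.
Variable Rg : R -> R -> Prop.
Hypothesis cross_row : forall x1 y1 x2 y2 y, Rg x1 y1 -> Rg x2 y2 -> between y1 y2 y ->
  exists x, between x1 x2 x /\ Rg x y.
Hypothesis cross_column : forall x1 y1 x2 y2 x, Rg x1 y1 -> Rg x2 y2 -> between x1 x2 x ->
  exists y, between y1 y2 y /\ Rg x y.
Variables xL yL xR yR xB yB xT yT : R.
Hypothesis HL : Rg xL yL.
Hypothesis HR : Rg xR yR.
Hypothesis HB : Rg xB yB.
Hypothesis HT : Rg xT yT.
Hypothesis Hbox : forall x y, Rg x y -> xL <= x <= xR /\ yB <= y <= yT.

Lemma fill_row x1 x2 y x : Rg x1 y -> Rg x2 y -> between x1 x2 x -> Rg x y.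
Proof.
  intros H1 H2 B. destruct (cross_column x1 y x2 y x H1 H2 B) as [y' [By Hr]].
  replace y with y'; [exact Hr | destruct By; lra].
Qed.

Lemma fill_column x y1 y2 y : Rg x y1 -> Rg x y2 -> between y1 y2 y -> Rg x y.
Proof.
  intros H1 H2 B. destruct (cross_row x y1 x y2 y H1 H2 B) as [x' [Bx Hr]].
  replace x with x'; [exact Hr | destruct Bx; lra].
Qed.

Ltac box_facts :=
  repeat match goal with H : Rg ?x ?y |- _ =>
    lazymatch goal with
    | _ : xL <= x <= xR /\ yB <= y <= yT |- _ => fail
    | _ => pose proof (Hbox x y H)
    end
  end.
Ltac cross_at_y u1 v1 u2 v2 y :=
  let x := fresh "x" in let Bx := fresh "Bx" in let Rx := fresh "Rx" in
  destruct (cross_row u1 v1 u2 v2 y ltac:(assumption) ltac:(assumption) ltac:(solve_between))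
    as [x [Bx Rx]].
Ltac cross_at_x u1 v1 u2 v2 x :=
  let y := fresh "y" in let By := fresh "By" in let Ry := fresh "Ry" in
  destruct (cross_column u1 v1 u2 v2 x ltac:(assumption) ltac:(assumption) ltac:(solve_between))
    as [y [By Ry]].

Section Rising.
Hypothesis Hy : yL < yR.
Hypothesis Hx : xT < xB.

Lemma row_reaches_xT x y : Rg x y -> yL <= y -> Rg xT y.
Proof.
  intros Hr Hly. box_facts. cross_at_y xT yT xL yL y.
  destruct (Rle_lt_dec yR y).
  - cross_at_y xT yT xR yR y. apply fill_row with x0 x1; auto. solve_between.
  - cross_at_y xB yB xR yR y. apply fill_row with x0 x1; auto. solve_between.
Qed.

Lemma row_reaches_xB x y : Rg x y -> y <= yR -> Rg xB y.
Proof.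
  intros Hr Hry. box_facts. cross_at_y xB yB xR yR y.
  destruct (Rle_lt_dec y yL).
  - cross_at_y xB yB xL yL y. apply fill_row with x0 x1; auto. solve_between.
  - cross_at_y xT yT xL yL y. apply fill_row with x0 x1; auto. solve_between.
Qed.

Lemma column_reaches_yL x y : Rg x y -> x <= xB -> Rg x yL.
Proof.
  intros Hr Hbx. box_facts. cross_at_x xL yL xB yB x.
  destruct (Rle_lt_dec x xT).
  - cross_at_x xL yL xT yT x. apply fill_column with y0 y1; auto. solve_between.
  - cross_at_x xT yT xR yR x. apply fill_column with y0 y1; auto. solve_between.
Qed.

Lemma column_reaches_yR x y : Rg x y -> xT <= x -> Rg x yR.
Proof.
  intros Hr Htx. box_facts. cross_at_x xT yT xR yR x.
  destruct (Rle_lt_dec xB x).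
  - cross_at_x xB yB xR yR x. apply fill_column with y0 y1; auto. solve_between.
  - cross_at_x xL yL xB yB x. apply fill_column with y0 y1; auto. solve_between.
Qed.

Lemma rising_hv_path_meets_chord_lines a1 b1 a2 b2 :
  ~ interior2 Rg a1 b1 -> ~ interior2 Rg a2 b2 ->
  (exists x y, on_hv a1 b1 a2 b2 x y /\ interior2 Rg x y) ->
  (exists x y, on_vh a1 b1 a2 b2 x y /\ interior2 Rg x y) ->
  exists x y, on_hv a1 b1 a2 b2 x y /\ Rg x y /\ (x = xT \/ x = xB \/ y = yL \/ y = yR).
Proof.
  apply (hv_path_meets_chord_lines Rg xT xB yL yR Hx Hy).
  - intros x y x' Hr Hly B. apply fill_row with x xT; auto. apply row_reaches_xT with x; auto.
  - intros x y x' Hr Hry B. apply fill_row with x xB; auto. apply row_reaches_xB with x; auto.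
  - intros x y y' Hr Hbx B. apply fill_column with y yL; auto. apply column_reaches_yL with y; auto.
  - intros x y y' Hr Htx B. apply fill_column with y yR; auto. apply column_reaches_yR with y; auto.
Qed.

End Rising.
End Staircase.

Definition orthoconvex (Rg : R -> R -> Prop) : Prop :=
  (forall x1 y1 x2 y2 y, Rg x1 y1 -> Rg x2 y2 -> between y1 y2 y ->
     exists x, between x1 x2 x /\ Rg x y) /\
  (forall x1 y1 x2 y2 x, Rg x1 y1 -> Rg x2 y2 -> between x1 x2 x ->
     exists y, between y1 y2 y /\ Rg x y).

Definition extreme_points (Rg : R -> R -> Prop) (xL yL xR yR xB yB xT yT : R) : Prop :=
  Rg xL yL /\ Rg xR yR /\ Rg xB yB /\ Rg xT yT /\
  forall x y, Rg x y -> xL <= x <= xR /\ yB <= y <= yT.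

Lemma between_opp a b x : between a b x -> between (- a) (- b) (- x).
Proof. solve_between. Qed.

Lemma orthoconvex_mirror Rg : orthoconvex Rg -> orthoconvex (fun x y => Rg x (- y)).
Proof.
  intros [Hr Hc]. split.
  - intros x1 y1 x2 y2 y H1 H2 B. exact (Hr _ _ _ _ (- y) H1 H2 (between_opp _ _ _ B)).
  - intros x1 y1 x2 y2 x H1 H2 B. destruct (Hc _ _ _ _ x H1 H2 B) as [y [By Hy]].
    exists (- y). rewrite Ropp_involutive. split; [solve_between | exact Hy].
Qed.

Lemma extreme_points_mirror Rg xL yL xR yR xB yB xT yT :
  extreme_points Rg xL yL xR yR xB yB xT yT ->
  extreme_points (fun x y => Rg x (- y)) xL (- yL) xR (- yR) xT (- yT) xB (- yB).
Proof.
  intros (HL & HR & HB & HT & Hbox). unfold extreme_points. cbv beta. rewrite !Ropp_involutive.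
  do 4 (split; [assumption|]). intros x y Hxy. destruct (Hbox x (- y) Hxy). lra.
Qed.

Lemma interior2_mirror Rg x y : interior2 Rg x y -> interior2 (fun a b => Rg a (- b)) x (- y).
Proof.
  intros [e [He H]]. exists e. split; [exact He|]. intros dx dy Hx Hy.
  replace (- (- y + dy)) with (y + - dy) by ring. apply H; [exact Hx | rewrite Rabs_Ropp; exact Hy].
Qed.

Lemma interior2_unmirror Rg x y : interior2 (fun a b => Rg a (- b)) x y -> interior2 Rg x (- y).
Proof.
  intros [e [He H]]. exists e. split; [exact He|]. intros dx dy Hx Hy.
  replace (- y + dy) with (- (y + - dy)) by ring. apply H; [exact Hx | rewrite Rabs_Ropp; exact Hy].
Qed.

Lemma on_hv_mirror a1 b1 a2 b2 x y : on_hv a1 b1 a2 b2 x y -> on_hv a1 (- b1) a2 (- b2) x (- y).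
Proof. intros [[E B]|[E B]]; [left|right]; split; try lra; solve_between. Qed.

Lemma on_hv_unmirror a1 b1 a2 b2 x y : on_hv a1 (- b1) a2 (- b2) x y -> on_hv a1 b1 a2 b2 x (- y).
Proof. intros [[E B]|[E B]]; [left|right]; split; try lra; solve_between. Qed.

Lemma on_vh_mirror a1 b1 a2 b2 x y : on_vh a1 b1 a2 b2 x y -> on_vh a1 (- b1) a2 (- b2) x (- y).
Proof. intros [[E B]|[E B]]; [left|right]; split; try lra; solve_between. Qed.

Theorem staircase_hv_path_meets_chord_lines Rg xL yL xR yR xB yB xT yT a1 b1 a2 b2 :
  orthoconvex Rg -> extreme_points Rg xL yL xR yR xB yB xT yT ->
  (yL < yR /\ xT < xB) \/ (yR < yL /\ xB < xT) ->
  ~ interior2 Rg a1 b1 -> ~ interior2 Rg a2 b2 ->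
  (exists x y, on_hv a1 b1 a2 b2 x y /\ interior2 Rg x y) ->
  (exists x y, on_vh a1 b1 a2 b2 x y /\ interior2 Rg x y) ->
  exists x y, on_hv a1 b1 a2 b2 x y /\ Rg x y /\ (x = xT \/ x = xB \/ y = yL \/ y = yR).
Proof.
  intros Hconv Hext [[Hy Hx]|[Hy Hx]] Np Nq [xz [yz [Hz Iz]]] [xz' [yz' [Hz' Iz']]].
  - destruct Hconv as [Hr Hc]. destruct Hext as (HL & HR & HB & HT & Hbox).
    apply (rising_hv_path_meets_chord_lines Rg Hr Hc xL yL xR yR xB yB xT yT); eauto.
  - (* reflect in the x-axis: the bottom and top edges swap roles *)
    destruct (orthoconvex_mirror Rg Hconv) as [Hr Hc].
    destruct (extreme_points_mirror Rg _ _ _ _ _ _ _ _ Hext) as (HL & HR & HB & HT & Hbox).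
    destruct (rising_hv_path_meets_chord_lines (fun x y => Rg x (- y)) Hr Hc
                xL (- yL) xR (- yR) xT (- yT) xB (- yB) HL HR HB HT Hbox ltac:(lra) Hx
                a1 (- b1) a2 (- b2)) as [x [y [Ho [Hxy Hl]]]].
    + intro I. apply Np. rewrite <- (Ropp_involutive b1). exact (interior2_unmirror Rg _ _ I).
    + intro I. apply Nq. rewrite <- (Ropp_involutive b2). exact (interior2_unmirror Rg _ _ I).
    + exists xz, (- yz). split; [exact (on_hv_mirror _ _ _ _ _ _ Hz) | exact (interior2_mirror _ _ _ Iz)].
    + exists xz', (- yz'). split; [exact (on_vh_mirror _ _ _ _ _ _ Hz') | exact (interior2_mirror _ _ _ Iz')].
    + exists x, (- y). split; [exact (on_hv_unmirror _ _ _ _ _ _ Ho)|]. split; [exact Hxy | lra].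
Qed.

Lemma interior_iff_interior2 V w :
  interior (region V) w <-> interior2 (fun x y => region V (x, y)) (px w) (py w).
Proof.
  split; intros [e [He H]]; exists e; split; auto.
  - intros dx dy Hx Hy. apply H. unfold dinf, px, py; simpl. fold (px w) (py w).
    replace (px w + dx - px w) with dx by ring. replace (py w + dy - py w) with dy by ring.
    apply Rmax_lub_lt; auto.
  - intros q Hq. unfold dinf in Hq.
    pose proof (Rmax_l (Rabs (px q - px w)) (Rabs (py q - py w))).
    pose proof (Rmax_r (Rabs (px q - px w)) (Rabs (py q - py w))).
    specialize (H (px q - px w) (py q - py w) ltac:(lra) ltac:(lra)). cbv beta in H.
    replace (px w + (px q - px w)) with (px q) in H by ring.
    replace (py w + (py q - py w)) with (py q) in H by ring. rewrite <- pt_eta in H. exact H.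
Qed.

Lemma Lpath_true_iff p q w :
  Lpath p q true w <-> on_hv (px p) (py p) (px q) (py q) (px w) (py w).
Proof.
  unfold Lpath, on_hv. rewrite seg_horizontal, seg_vertical by reflexivity. simpl. tauto.
Qed.

Lemma Lpath_false_iff p q w :
  Lpath p q false w <-> on_vh (px p) (py p) (px q) (py q) (px w) (py w).
Proof.
  unfold Lpath, on_vh. rewrite seg_vertical, seg_horizontal by reflexivity. simpl. tauto.
Qed.

Lemma Lpath_swap p q w : Lpath p q false w <-> Lpath q p true w.
Proof.
  rewrite Lpath_false_iff, Lpath_true_iff. unfold on_hv, on_vh.
  split; intros [[E B]|[E B]]; [right|left|right|left]; split; auto; apply between_sym; auto.
Qed.

Lemma rect_convex_orthoconvex V : rect_convex V -> orthoconvex (fun x y => region V (x, y)).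
Proof.
  intros Hc. split.
  - intros x1 y1 x2 y2 y H1 H2 B. exact (rect_convex_cross_row V (x1, y1) (x2, y2) y Hc H1 H2 B).
  - intros x1 y1 x2 y2 x H1 H2 B. exact (rect_convex_cross_column V (x1, y1) (x2, y2) x Hc H1 H2 B).
Qed.

Section Chords.
Variable V : list pt.
Variables eL eR eB eT : pt.
Variables sL sR sB sT : pt * pt.
Hypothesis Hc : rect_convex V.
Hypothesis Hext : extreme_points (fun x y => region V (x, y))
  (px eL) (py eL) (px eR) (py eR) (px eB) (py eB) (px eT) (py eT).
Hypothesis Hord : (py eL < py eR /\ px eT < px eB) \/ (py eR < py eL /\ px eB < px eT).
Hypothesis CL : forall w, region V w -> py w = py eL -> seg_of sL w.
Hypothesis CR : forall w, region V w -> py w = py eR -> seg_of sR w.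
Hypothesis CB : forall w, region V w -> px w = px eB -> seg_of sB w.
Hypothesis CT : forall w, region V w -> px w = px eT -> seg_of sT w.

Lemma chords_meet_hv_Lpath p q : ~ interior (region V) p -> ~ interior (region V) q ->
  meets (Lpath p q true) (interior (region V)) -> meets (Lpath p q false) (interior (region V)) ->
  exists s, In s (sL :: sR :: sB :: sT :: nil) /\ meets (Lpath p q true) (seg_of s).
Proof.
  intros Np Nq [z [Hz Iz]] [z' [Hz' Iz']].
  rewrite interior_iff_interior2 in Np, Nq, Iz, Iz'.
  rewrite Lpath_true_iff in Hz. rewrite Lpath_false_iff in Hz'.
  destruct (staircase_hv_path_meets_chord_lines _ _ _ _ _ _ _ _ _ (px p) (py p) (px q) (py q)
              (rect_convex_orthoconvex V Hc) Hext Hord Np Nq) as [x [y [Ho [Hr Hl]]]];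
    [exists (px z), (py z); auto | exists (px z'), (py z'); auto |].
  assert (HP : Lpath p q true (x, y)) by (apply Lpath_true_iff; exact Ho).
  destruct Hl as [E|[E|[E|E]]]; [exists sT | exists sB | exists sL | exists sR];
    (split; [simpl; tauto | exists (x, y); split; [exact HP |]]);
    [apply CT | apply CB | apply CL | apply CR]; auto.
Qed.

Lemma chords_skeleton : inside V (sL :: sR :: sB :: sT :: nil) ->
  skeleton V (sL :: sR :: sB :: sT :: nil).
Proof.
  intros Hin. split; [exact Hin|]. intros p q Np Nq Hk [|].
  - exact (chords_meet_hv_Lpath p q Np Nq (Hk true) (Hk false)).
  - destruct (chords_meet_hv_Lpath q p Nq Np) as [s [Hs [w [Hw1 Hw2]]]].
    + destruct (Hk false) as [w [Hw1 Hw2]]. exists w. split; [apply Lpath_swap|]; auto.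
    + destruct (Hk true) as [w [Hw1 Hw2]]. exists w. split; [|exact Hw2].
      apply Lpath_swap. apply Lpath_swap in Hw1. apply Lpath_swap in Hw1. exact Hw1.
    + exists s. split; auto. exists w. split; [apply Lpath_swap|]; auto.
Qed.

End Chords.

(** * Every skeleton touches every extreme edge *)

Lemma interior_in (A : pt -> Prop) w : interior A w -> A w.
Proof.
  intros [e [He H]]. apply H. unfold dinf. rewrite !Rminus_diag, Rabs_R0, Rmax_left; lra.
Qed.

Lemma Lpath_aligned p q k w : (px p = px q \/ py p = py q) -> (Lpath p q k w <-> seg p q w).
Proof.
  intros [E|E]; unfold Lpath; destruct k.
  - rewrite !seg_vertical by (simpl; auto). simpl. split.
    + intros [[H1 H2]|[H1 H2]]; split; auto; solve_between.
    + intros [H1 H2]. right. split; [lra | auto].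
  - rewrite !seg_vertical by (simpl; auto). simpl. split.
    + intros [[H1 H2]|[H1 H2]]; split; auto; solve_between.
    + intros [H1 H2]. left. split; auto.
  - rewrite !seg_horizontal by (simpl; auto). simpl. split.
    + intros [[H1 H2]|[H1 H2]]; split; auto; solve_between.
    + intros [H1 H2]. left. split; auto.
  - rewrite !seg_horizontal by (simpl; auto). simpl. split.
    + intros [[H1 H2]|[H1 H2]]; split; auto; solve_between.
    + intros [H1 H2]. right. split; [lra | auto].
Qed.

Lemma list_max_gap {X : Type} (l : list X) (f : X -> R) M :
  (forall x, In x l -> f x < M) -> exists g, 0 < g /\ forall x, In x l -> f x <= M - g.
Proof.
  induction l as [|a l IH]; intros H.
  - exists 1. split; [lra|]. intros x [].
  - destruct IH as [g [Hg Hl]]; [intros x Hx; apply H; right; auto|].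
    assert (Ha : f a < M) by (apply H; left; auto).
    exists (Rmin g (M - f a)). pose proof (Rmin_l g (M - f a)). pose proof (Rmin_r g (M - f a)).
    split; [apply Rmin_glb_lt; lra|].
    intros x [<-|Hx]; [lra | specialize (Hl x Hx); lra].
Qed.

Definition touches (V : list pt) (i : nat) (s : pt * pt) : Prop :=
  edge_pts V i (fst s) \/ edge_pts V i (snd s).

Section Touch.
Variables (V : list pt) (al be : R) (i : nat).
Hypothesis Hax : axis al be.
Hypothesis Hob : obstacle V.
Hypothesis Hrl : rectilinear V.
Hypothesis Hc : rect_convex V.
Hypothesis Hsup : supporting_edge V al be i.

Lemma vertex_off_edge_below k : (k < nv V)%nat -> k <> i -> k <> nxt V i ->
  height al be (vtx V k) < height al be (vtx V i).
Proof.
  intros Hk Nki Nkn. destruct Hsup as [Hi HE]. destruct Hob as [[H3 _] Hgp].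
  assert (Hn : (nxt V i < nv V)%nat) by (apply nxt_lt; lia).
  destruct (HE k Hk) as [Hle _].
  destruct (Req_dec (height al be (vtx V k)) (height al be (vtx V i))) as [E|E]; [exfalso | lra].
  apply (Hgp i (nxt V i) k Hi Hn Hk); auto.
  - intro X. exact (nxt_neq V i H3 Hi (eq_sym X)).
  - exact (level_collinear al be Hax _ _ _ (supporting_edge_level V al be i (conj Hi HE)) (eq_sym E)).
Qed.

Lemma edge_point_at j h o : (j < nv V)%nat ->
  offset al be (vtx V j) = o -> offset al be (vtx V (nxt V j)) = o ->
  between (height al be (vtx V j)) (height al be (vtx V (nxt V j))) h ->
  region V (point_at al be h o).
Proof.
  intros Hj E1 E2 B. apply (edge_in_region V j); auto. unfold edge_pts.
  apply (seg_level_offset al be Hax); [congruence|].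
  rewrite height_point_at, offset_point_at by auto. split; [auto | exact B].
Qed.

Lemma strip_below_edge : exists delta, 0 < delta /\
  forall h o, height al be (vtx V i) - delta <= h <= height al be (vtx V i) ->
    between (offset al be (vtx V i)) (offset al be (vtx V (nxt V i))) o ->
    region V (point_at al be h o).
Proof.
  destruct Hob as [[H3 _] _]. destruct Hsup as [Hi _]. set (M := height al be (vtx V i)).
  assert (Hn : (nxt V i < nv V)%nat) by (apply nxt_lt; lia).
  destruct (prev_exists V i H3 Hi) as [j [Hj [Hji [Nji Njn]]]].
  set (A := vtx V i) in *. set (B := vtx V (nxt V i)). set (C := vtx V (nxt V (nxt V i))).
  set (D := vtx V j).
  assert (EB : height al be B = M) by (symmetry; apply supporting_edge_level; exact Hsup).
  assert (HC : height al be C < M) by (apply vertex_off_edge_below;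
    [apply nxt_lt; lia | apply nxt_nxt_neq; auto | intro X; exact (nxt_neq V _ H3 Hn X)]).
  assert (HD : height al be D < M) by (apply vertex_off_edge_below; auto).
  assert (OC : offset al be C = offset al be B)
    by (symmetry; apply aligned_offset_eq; [auto | apply Hrl; auto | fold B C; lra]).
  assert (OD : offset al be D = offset al be A).
  { apply aligned_offset_eq; auto; [|fold D; unfold M in HD; fold A in HD; lra].
    pose proof (Hrl j Hj) as X. rewrite Hji in X. exact X. }
  exists (Rmin (M - height al be C) (M - height al be D)).
  pose proof (Rmin_l (M - height al be C) (M - height al be D)).
  pose proof (Rmin_r (M - height al be C) (M - height al be D)).
  split; [apply Rmin_glb_lt; lra|]. intros h o Hh Ho.
  assert (RB : region V (point_at al be h (offset al be B))).
  { apply (edge_point_at (nxt V i)); auto. fold B C. rewrite EB. solve_between. }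
  assert (RA : region V (point_at al be h (offset al be A))).
  { apply (edge_point_at j); [exact Hj | exact OD | rewrite Hji; reflexivity |].
    rewrite Hji. fold A D. unfold M in *. solve_between. }
  apply (rect_convex_level_seg V al be _ _ Hax Hc RB RA); [rewrite !height_point_at; auto|].
  apply (seg_level al be Hax); [rewrite !height_point_at; auto|].
  rewrite !height_point_at, !offset_point_at by auto. split; auto. apply between_sym; auto.
Qed.

Lemma strip_interior delta h : 0 < delta ->
  (forall h o, height al be (vtx V i) - delta <= h <= height al be (vtx V i) ->
     between (offset al be (vtx V i)) (offset al be (vtx V (nxt V i))) o ->
     region V (point_at al be h o)) ->
  height al be (vtx V i) - delta < h < height al be (vtx V i) ->
  interior (region V)
    (point_at al be h ((offset al be (vtx V i) + offset al be (vtx V (nxt V i))) / 2)).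
Proof.
  intros Hd Hstrip Hh. set (oA := offset al be (vtx V i)) in *.
  set (oB := offset al be (vtx V (nxt V i))) in *. set (M := height al be (vtx V i)) in *.
  assert (NAB : oA <> oB).
  { intro E. destruct Hsup as [Hi _].
    exact (edge_ends_neq V i Hob Hi (point_eq_of_coords al be Hax _ _ (supporting_edge_level V al be i Hsup) E)). }
  assert (Hgap : 0 < Rabs (oA - oB)) by (apply Rabs_pos_lt; lra).
  set (r := Rmin (h - (M - delta)) (Rmin (M - h) (Rabs (oA - oB) / 2))).
  pose proof (Rmin_l (h - (M - delta)) (Rmin (M - h) (Rabs (oA - oB) / 2))).
  pose proof (Rmin_r (h - (M - delta)) (Rmin (M - h) (Rabs (oA - oB) / 2))).
  pose proof (Rmin_l (M - h) (Rabs (oA - oB) / 2)). pose proof (Rmin_r (M - h) (Rabs (oA - oB) / 2)).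
  exists r. split; [unfold r; repeat apply Rmin_glb_lt; lra|].
  intros w Hw. apply (dinf_coords_lt al be Hax) in Hw.
  rewrite height_point_at, offset_point_at in Hw by auto. destruct Hw as [W1 W2].
  unfold r in W1, W2. rewrite (point_at_coords al be Hax w).
  apply Hstrip; [rabs | unfold between; rabs].
Qed.

Lemma endpoints_below_edge S : inside V S ->
  ~ (exists s, In s S /\ touches V i s) ->
  forall s, In s S -> Rmax (height al be (fst s)) (height al be (snd s)) < height al be (vtx V i).
Proof.
  intros Hin Hno s Hs. destruct (Hin s Hs) as [_ Hsub].
  assert (Hend : forall e, region V e ->
            (edge_pts V i e -> touches V i s) ->
            height al be e < height al be (vtx V i)).
  { intros e He Hto. pose proof (region_height_le V al be i Hax Hsup e He).
    destruct (Req_dec (height al be e) (height al be (vtx V i))) as [E|E]; [|lra].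
    exfalso. apply Hno. exists s. split; auto. apply Hto.
    apply (region_highest_on_edge V al be i Hax Hsup Hob); auto; lra. }
  apply Rmax_lub_lt; apply Hend;
    [apply Hsub, seg_start | intro; left; assumption | apply Hsub, seg_end | intro; right; assumption].
Qed.

Lemma far_point_not_interior K h o : (forall w, region V w -> Rabs (px w) <= K /\ Rabs (py w) <= K) ->
  K < Rabs o -> ~ interior (region V) (point_at al be h o).
Proof.
  intros HK Ho X. apply interior_in in X. destruct (HK _ X) as [K1 K2].
  pose proof (offset_bound al be Hax _ K K1 K2). rewrite offset_point_at in H by auto. lra.
Qed.

Theorem skeleton_touches_supporting_edge S K :
  (forall w, region V w -> Rabs (px w) <= K /\ Rabs (py w) <= K) -> skeleton V S ->
  exists s, In s S /\ touches V i s.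
Proof.
  intros HK [Hin Hsk]. apply NNPP. intros Hno.
  set (M := height al be (vtx V i)).
  destruct (list_max_gap S (fun s => Rmax (height al be (fst s)) (height al be (snd s))) M
              (endpoints_below_edge S Hin Hno)) as [g [Hg Hgap]].
  destruct strip_below_edge as [delta [Hd Hstrip]].
  (* a level line just below the edge, above every segment of S, crossing the strip *)
  set (h := M - Rmin g delta / 2).
  assert (Hh : M - delta < h < M /\ M - g < h).
  { pose proof (Rmin_l g delta). pose proof (Rmin_r g delta).
    assert (0 < Rmin g delta) by (apply Rmin_glb_lt; lra). unfold h. lra. }
  set (oA := offset al be (vtx V i)). set (oB := offset al be (vtx V (nxt V i))).
  set (p := point_at al be h (- K - 1)). set (q := point_at al be h (K + 1)).
  set (z := point_at al be h ((oA + oB) / 2)).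
  assert (Hlev : forall o, height al be (point_at al be h o) = height al be p)
    by (intro o; unfold p; rewrite !height_point_at; auto).
  assert (Hpq : height al be p = height al be q) by exact (eq_sym (Hlev (K + 1))).
  assert (Al : px p = px q \/ py p = py q) by exact (level_aligned al be Hax p q Hpq).
  assert (Hz : seg p q z).
  { destruct Hsup as [Hi _]. assert (Hn : (nxt V i < nv V)%nat) by (apply nxt_lt; lia).
    destruct (HK _ (edge_in_region V i _ Hi (seg_start _ _))) as [A1 A2].
    destruct (HK _ (edge_in_region V i _ Hi (seg_end _ _))) as [B1 B2].
    pose proof (offset_bound al be Hax _ K A1 A2). pose proof (offset_bound al be Hax _ K B1 B2).
    apply (seg_level al be Hax p q z Hpq). split; [exact (Hlev _)|].
    unfold p, q, z. rewrite !offset_point_at by auto. unfold oA, oB in *. unfold between. rabs. }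
  destruct (Hsk p q) with (k := true) as [s [Hs [w [Hw1 Hw2]]]].
  - apply far_point_not_interior with K; auto. rabs.
  - apply far_point_not_interior with K; auto. rabs.
  - intros k. exists z. split; [apply Lpath_aligned; auto | apply strip_interior with delta; auto; fold M; lra].
  - apply (Lpath_aligned p q true w Al), (seg_level al be Hax p q w Hpq) in Hw1.
    destruct Hw1 as [Ew _]. unfold p in Ew. rewrite height_point_at in Ew by auto.
    pose proof (Hgap s Hs) as G. cbv beta in G.
    pose proof (seg_height_le al be _ _ _ _ Hw2 (Rmax_l _ _) (Rmax_r _ _)). lra.
Qed.

End Touch.

(** * Type (c) obstacles *)

Lemma segment_touches_one_extreme_edge V s i j :
  (forall i j, extreme_edge V i -> extreme_edge V j -> i <> j ->
     ~ mutually_visible (region V) (edge_pts V i) (edge_pts V j)) ->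
  extreme_edge V i -> extreme_edge V j -> subset (seg_of s) (region V) ->
  touches V i s -> touches V j s -> i = j.
Proof.
  intros Hmv Ei Ej Hsub Ti Tj. destruct (Nat.eq_dec i j) as [|Nij]; [assumption|exfalso].
  assert (Hvis : forall u v, seg (fst s) (snd s) u -> seg (fst s) (snd s) v ->
                 edge_pts V i u -> edge_pts V j v -> False).
  { intros u v Hu Hv Eu Ev. apply (Hmv i j Ei Ej Nij). exists u, v. split; [exact Eu|].
    split; [exact Ev|]. intros w Hw. apply Hsub, (seg_subset _ _ _ _ Hu Hv w Hw). }
  pose proof (seg_start (fst s) (snd s)). pose proof (seg_end (fst s) (snd s)).
  destruct Ti, Tj; (eapply Hvis; [| | eassumption | eassumption]; assumption).
Qed.

Lemma set_size_le_length S n : set_size S n -> (n <= length S)%nat.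
Proof. intros [l [Hnd [Hin <-]]]. apply NoDup_incl_length; auto. intros x Hx. apply Hin; auto. Qed.

Lemma set_size_ge S n l : set_size S n -> NoDup l -> incl l S -> (length l <= n)%nat.
Proof. intros [l' [Hnd [Hin <-]]] Hl Hincl. apply NoDup_incl_length; auto. intros x Hx. apply Hin; auto. Qed.

Lemma NoDup4 {X : Type} (a b c d : X) :
  a <> b -> a <> c -> a <> d -> b <> c -> b <> d -> c <> d -> NoDup (a :: b :: c :: d :: nil).
Proof. intros. repeat constructor; simpl; intuition. Qed.

Lemma separated_lt a b c d y1 y2 : ~ intervals_meet a b c d -> (a + b) / 2 < (c + d) / 2 ->
  between a b y1 -> between c d y2 -> y1 < y2.
Proof. unfold intervals_meet, Rmax, Rmin, between. intros H M B1 B2. repeat destruct Rle_dec; lra. Qed.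

Lemma intervals_meet_sym a b c d : intervals_meet a b c d -> intervals_meet c d a b.
Proof. unfold intervals_meet, Rmax, Rmin. repeat destruct Rle_dec; lra. Qed.

Lemma intervals_meet_refl a b : intervals_meet a b a b.
Proof. unfold intervals_meet, Rmax, Rmin. repeat destruct Rle_dec; lra. Qed.

Lemma vertical_horizontal_edges_neq V i j : obstacle V -> (i < nv V)%nat ->
  px (vtx V i) = px (vtx V (nxt V i)) -> py (vtx V j) = py (vtx V (nxt V j)) -> i <> j.
Proof.
  intros Hob Hi E1 E2 <-. apply (edge_ends_neq V i Hob Hi).
  rewrite (pt_eta (vtx V i)), (pt_eta (vtx V (nxt V i))), E1, E2. reflexivity.
Qed.

Lemma px_emid V i : px (emid V i) = (px (vtx V i) + px (vtx V (nxt V i))) / 2.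
Proof. reflexivity. Qed.

Lemma py_emid V i : py (emid V i) = (py (vtx V i) + py (vtx V (nxt V i))) / 2.
Proof. reflexivity. Qed.

Section TypeC.
Variables (V : list pt) (iL iR iB iT : nat).
Hypothesis Htc : typeC V iL iR iB iT.

Lemma typeC_obstacle : obstacle V.
Proof. apply Htc. Qed.

Lemma typeC_rect_convex : rect_convex V.
Proof. apply Htc. Qed.

Lemma typeC_supporting : supporting_edge V (-1) 0 iL /\ supporting_edge V 1 0 iR /\
  supporting_edge V 0 (-1) iB /\ supporting_edge V 0 1 iT.
Proof.
  destruct Htc as [_ (HL & HR & HB & HT & _)]. split; [|split; [|split]];
    [apply left_edge_supporting | apply right_edge_supporting
    | apply bottom_edge_supporting | apply top_edge_supporting]; assumption.
Qed.

Lemma typeC_vertical_horizontal :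
  px (vtx V iL) = px (vtx V (nxt V iL)) /\ px (vtx V iR) = px (vtx V (nxt V iR)) /\
  py (vtx V iB) = py (vtx V (nxt V iB)) /\ py (vtx V iT) = py (vtx V (nxt V iT)).
Proof.
  destruct typeC_supporting as (SL & SR & SB & ST).
  apply supporting_edge_level in SL, SR, SB, ST. unfold height in *. repeat split; lra.
Qed.

Lemma typeC_region_box w : region V w ->
  px (vtx V iL) <= px w <= px (vtx V iR) /\ py (vtx V iB) <= py w <= py (vtx V iT).
Proof.
  intros Hw. destruct typeC_supporting as (SL & SR & SB & ST).
  pose proof (region_height_le V _ _ iL axis_left SL w Hw).
  pose proof (region_height_le V _ _ iR axis_right SR w Hw).
  pose proof (region_height_le V _ _ iB axis_bottom SB w Hw).
  pose proof (region_height_le V _ _ iT axis_top ST w Hw).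
  unfold height in *. lra.
Qed.

Lemma typeC_chord_order eL eR eB eT :
  edge_pts V iL eL -> edge_pts V iR eR -> edge_pts V iB eB -> edge_pts V iT eT ->
  (py eL < py eR /\ px eT < px eB) \/ (py eR < py eL /\ px eB < px eT).
Proof.
  intros EL ER EB ET. pose proof typeC_vertical_horizontal as (vL & vR & hB & hT).
  destruct Htc as [_ (HL & HR & HB & HT & NOv & NOh & Hsl)].
  assert (Gx : px (vtx V iL) <= px (vtx V iR)) by (destruct HL as [_ H], HR; apply H; auto).
  assert (Gy : py (vtx V iB) <= py (vtx V iT)) by (destruct HB as [_ H], HT; apply H; auto).
  apply seg_between_y in EL, ER. apply seg_between_x in EB, ET.
  unfold overlap_vert, overlap_horiz in NOv, NOh.
  unfold pos_sloped, neg_sloped in Hsl. rewrite !px_emid, !py_emid, <- vL, <- vR, <- hB, <- hT in Hsl.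
  destruct Hsl as [[P1 P2]|[P1 P2]]; [left | right]; split.
  - apply (separated_lt _ _ _ _ _ _ NOv); auto. nra.
  - apply (separated_lt _ _ _ _ _ _ (fun H => NOh (intervals_meet_sym _ _ _ _ H))); auto. nra.
  - apply (separated_lt _ _ _ _ _ _ (fun H => NOv (intervals_meet_sym _ _ _ _ H))); auto. nra.
  - apply (separated_lt _ _ _ _ _ _ NOh); auto. nra.
Qed.

Lemma typeC_extreme_points eL eR eB eT :
  edge_pts V iL eL -> edge_pts V iR eR -> edge_pts V iB eB -> edge_pts V iT eT ->
  extreme_points (fun x y => region V (x, y))
    (px eL) (py eL) (px eR) (py eR) (px eB) (py eB) (px eT) (py eT).
Proof.
  intros EL ER EB ET. pose proof typeC_vertical_horizontal as (vL & vR & hB & hT).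
  destruct typeC_supporting as ([HiL _] & [HiR _] & [HiB _] & [HiT _]).
  do 4 (split; [rewrite <- pt_eta; eapply edge_in_region; [|eassumption]; assumption|]).
  apply seg_vertical in EL, ER; auto. apply seg_horizontal in EB, ET; auto.
  intros x y Hr. pose proof (typeC_region_box _ Hr). simpl in *. lra.
Qed.

Theorem typeC_skeleton sL sR sB sT :
  perp_ext_vis_edge V sL iL -> perp_ext_vis_edge V sR iR ->
  perp_ext_vis_edge V sB iB -> perp_ext_vis_edge V sT iT ->
  skeleton V (sL :: sR :: sB :: sT :: nil).
Proof.
  intros HpL HpR HpB HpT. pose proof typeC_obstacle as Hob. pose proof typeC_rect_convex as Hc.
  pose proof typeC_vertical_horizontal as (vL & vR & hB & hT).
  destruct typeC_supporting as ([HiL _] & [HiR _] & [HiB _] & [HiT _]).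
  destruct (vertical_edge_chord V sL iL Hob Hc HiL vL HpL) as [eL [EL CL]].
  destruct (vertical_edge_chord V sR iR Hob Hc HiR vR HpR) as [eR [ER CR]].
  destruct (horizontal_edge_chord V sB iB Hob Hc HiB hB HpB) as [eB [EB CB]].
  destruct (horizontal_edge_chord V sT iT Hob Hc HiT hT HpT) as [eT [ET CT]].
  apply (chords_skeleton V eL eR eB eT); auto.
  - apply typeC_extreme_points; auto.
  - apply typeC_chord_order; auto.
  - intros s Hs. simpl in Hs.
    destruct Hs as [<-|[<-|[<-|[<-|[]]]]]; eapply perp_ext_vis_edge_inside; eassumption.
Qed.

Lemma typeC_extreme_edges_distinct :
  iL <> iR /\ iL <> iB /\ iL <> iT /\ iR <> iB /\ iR <> iT /\ iB <> iT.
Proof.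
  pose proof typeC_obstacle as Hob. pose proof typeC_vertical_horizontal as (vL & vR & hB & hT).
  destruct typeC_supporting as ([HiL _] & [HiR _] & _).
  destruct Htc as [_ (_ & _ & _ & _ & NOv & NOh & _)].
  repeat split; try (apply (vertical_horizontal_edges_neq V); assumption).
  - intros <-. exact (NOv (intervals_meet_refl _ _)).
  - intros <-. exact (NOh (intervals_meet_refl _ _)).
Qed.

Theorem typeC_skeleton_size S n :
  (forall i j, extreme_edge V i -> extreme_edge V j -> i <> j ->
     ~ mutually_visible (region V) (edge_pts V i) (edge_pts V j)) ->
  skeleton V S -> set_size S n -> (4 <= n)%nat.
Proof.
  intros Hmv Hsk Hn. pose proof typeC_obstacle as Hob.
  destruct Htc as [[_ [Hrl [Hc _]]] (HL & HR & HB & HT & _)].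
  destruct typeC_supporting as (SL & SR & SB & ST).
  set (K := Rabs (px (vtx V iL)) + Rabs (px (vtx V iR)) + Rabs (py (vtx V iB)) + Rabs (py (vtx V iT))).
  assert (HK : forall w, region V w -> Rabs (px w) <= K /\ Rabs (py w) <= K)
    by (intros w Hw; destruct (typeC_region_box w Hw); unfold K; split; rabs).
  destruct (skeleton_touches_supporting_edge V _ _ iL axis_left Hob Hrl Hc SL S K HK Hsk) as [tL [InL TL]].
  destruct (skeleton_touches_supporting_edge V _ _ iR axis_right Hob Hrl Hc SR S K HK Hsk) as [tR [InR TR]].
  destruct (skeleton_touches_supporting_edge V _ _ iB axis_bottom Hob Hrl Hc SB S K HK Hsk) as [tB [InB TB]].
  destruct (skeleton_touches_supporting_edge V _ _ iT axis_top Hob Hrl Hc ST S K HK Hsk) as [tT [InT TT]].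
  assert (XL : extreme_edge V iL) by (left; auto).
  assert (XR : extreme_edge V iR) by (right; left; auto).
  assert (XB : extreme_edge V iB) by (right; right; left; auto).
  assert (XT : extreme_edge V iT) by (right; right; right; auto).
  destruct typeC_extreme_edges_distinct as (nLR & nLB & nLT & nRB & nRT & nBT).
  assert (Hdist : forall s t i j, touches V i s -> touches V j t -> In s S ->
                    extreme_edge V i -> extreme_edge V j -> i <> j -> s <> t)
    by (intros s t i j Ti Tj Hs Ei Ej Nij <-;
        exact (Nij (segment_touches_one_extreme_edge V s i j Hmv Ei Ej (proj2 (proj1 Hsk s Hs)) Ti Tj))).
  change 4%nat with (length (tL :: tR :: tB :: tT :: nil)). apply (set_size_ge S); auto.
  - apply NoDup4; eapply Hdist; eauto.
  - intros x Hx. simpl in Hx. destruct Hx as [<-|[<-|[<-|[<-|[]]]]]; auto.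
Qed.

End TypeC.

Theorem lemma20 (V : list pt) (iL iR iB iT : nat) (sL sR sB sT : pt * pt) :
  typeC V iL iR iB iT ->
  (forall i j, extreme_edge V i -> extreme_edge V j -> i <> j ->
     ~ mutually_visible (region V) (edge_pts V i) (edge_pts V j)) ->
  perp_ext_vis_edge V sL iL -> perp_ext_vis_edge V sR iR ->
  perp_ext_vis_edge V sB iB -> perp_ext_vis_edge V sT iT ->
  minimum_skeleton V (sL :: sR :: sB :: sT :: nil).
Proof.
  intros Htc Hmv HpL HpR HpB HpT. split.
  - exact (typeC_skeleton V iL iR iB iT Htc sL sR sB sT HpL HpR HpB HpT).
  - intros S' n n' Hsk' Hn Hn'.
    pose proof (set_size_le_length _ _ Hn) as Hle4.
    pose proof (typeC_skeleton_size V iL iR iB iT Htc S' n' Hmv Hsk' Hn') as Hge4.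
    simpl in Hle4. lia.
Qed.
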